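(* Let $\ell(c)$ be a Banach function space of real sequences with $\ell^1\subset\ell(c)\subset\ell^0$ having the Fatou property, and let $M=(a_{ij})$ be an infinite real matrix whose columns $C_j=(a_{ij})_i$ are nonzero, satisfy $C_j\in\ell(c)$ for all $j$, and $\sup_j\|C_j\|_{\ell(c)}<\infty$ (so that $M$ defines a continuous linear operator $M\colon\ell^1\to\ell(c)$, $Mx=(\sum_ja_{ij}x_j)_i$). Let $p>1$. The following are equivalent: (a) $M$ defines a continuous linear operator $M\colon\ell^p\to\ell(c)$, i.e. for every $x\in\ell^p$ the series $\sum_ja_{ij}x_j$ converge for all $i$, $Mx\in\ell(c)$, and $x\mapsto Mx$ is bounded from $\ell^p$ to $\ell(c)$; (b) $M\colon\ell^1\to\ell(c)$ is $\frac1p$-th power factorable with a continuous extension, i.e. it admits a continuous linear extension $\ell^p\to\ell(c)$; (c) $\ell^p\subset\ell^1(m_M)$; (d) $\ell^1\subset\ell^{1/p}(m_M)\cap\ell^1(m_M)$; (e) there exists $C>0$ such that $\big\|\sum_{j\in F}x_jC_j\big\|_{\ell(c)}\le C\big(\sum_{j\in F}x_j^p\big)^{1/p}$ for all finite $F\subset\mathbb N$ and all $(x_j)_{j\in F}\subset[0,\infty)$.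
   Context: $\ell^0$ is the space of all real sequences. A Banach function space of sequences $\ell(c)\subset\ell^0$ is a vector subspace, solid under the coordinatewise order, complete under a norm monotone for that order. Fatou property: if $(x^k)\subset\ell(c)$, $0\le x^k\uparrow x$ pointwise and $\sup_k\|x^k\|<\infty$, then $x\in\ell(c)$ and $\|x^k\|\uparrow\|x\|$. $\mathcal P_F(\mathbb N)$ is the $\delta$-ring of finite subsets of $\mathbb N$; $m_M\colon\mathcal P_F(\mathbb N)\to\ell(c)$, $m_M(A)=M\chi_A=\sum_{j\in A}C_j$, is a vector measure whose only null set is $\emptyset$. For $x^*\in\ell(c)^*$, $|x^*m_M|$ is the variation of $x^*\circ m_M$ on $\mathcal P(\mathbb N)$. $\ell^1(m_M)$ is the set of $x\in\ell^0$ with $x\in L^1(|x^*m_M|)$ for every $x^*\in\ell(c)^*$ and such that for each $A\subset\mathbb N$ there is $\int_Ax\,dm_M\in\ell(c)$ with $x^*(\int_Ax\,dm_M)=\int_Ax\,dx^*m_M$ for all $x^*$. For $r\in(0,\infty)$, $\ell^r(m_M)=\{x\in\ell^0:|x|^r\in\ell^1(m_M)\}$. *)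

From Stdlib Require Import Reals List.
From Coquelicot Require Import Coquelicot.
Open Scope R_scope.

(** Sequences are [nat -> R]; an infinite matrix is [a : nat -> nat -> R],
    with [a i j] the entry in row i, column j. *)
Definition seqR := nat -> R.

Definition seq_add (x y : seqR) : seqR := fun i => x i + y i.
Definition seq_scal (c : R) (x : seqR) : seqR := fun i => c * x i.
Definition seq_zero : seqR := fun _ => 0.

(** Power a^r for a >= 0 with the convention 0^r = 0 (r > 0). *)
Definition rp (a r : R) : R := if Rle_dec a 0 then 0 else Rpower a r.

Definition in_l1 (x : seqR) : Prop := ex_series (fun j => Rabs (x j)).
Definition in_lp (p : R) (x : seqR) : Prop :=
  ex_series (fun j => rp (Rabs (x j)) p).
Definition lp_norm (p : R) (x : seqR) : R :=
  rp (Series (fun j => rp (Rabs (x j)) p)) (/ p).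

Definition is_BFS (L : seqR -> Prop) (N : seqR -> R) : Prop :=
  L seq_zero /\
  (forall x y, L x -> L y -> L (seq_add x y)) /\
  (forall c x, L x -> L (seq_scal c x)) /\
  (forall x, L x -> 0 <= N x) /\
  (forall x, L x -> N x = 0 -> forall i, x i = 0) /\
  (forall c x, L x -> N (seq_scal c x) = Rabs c * N x) /\
  (forall x y, L x -> L y -> N (seq_add x y) <= N x + N y) /\
  (forall x y, L x -> (forall i, Rabs (y i) <= Rabs (x i)) -> L y /\ N y <= N x) /\
  (forall u : nat -> seqR, (forall n, L (u n)) ->
     (forall eps, 0 < eps -> exists n0, forall m n, (n0 <= m)%nat -> (n0 <= n)%nat ->
        N (seq_add (u m) (seq_scal (-1) (u n))) < eps) ->
     exists x, L x /\ forall eps, 0 < eps -> exists n0, forall n, (n0 <= n)%nat ->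
        N (seq_add (u n) (seq_scal (-1) x)) < eps).

Definition Fatou (L : seqR -> Prop) (N : seqR -> R) : Prop :=
  forall (u : nat -> seqR) (x : seqR),
    (forall k, L (u k)) ->
    (forall k i, 0 <= u k i /\ u k i <= u (S k) i) ->
    (forall i, is_lim_seq (fun k => u k i) (x i)) ->
    (exists B, forall k, N (u k) <= B) ->
    L x /\ is_lim_seq (fun k => N (u k)) (N x).

(** Elements of the (topological) dual l(c)^*: continuous linear functionals
    on L (only their values on L matter). *)
Definition in_dual (L : seqR -> Prop) (N : seqR -> R) (phi : seqR -> R) : Prop :=
  (forall x y, L x -> L y -> phi (seq_add x y) = phi x + phi y) /\
  (forall c x, L x -> phi (seq_scal c x) = c * phi x) /\
  (exists K, forall x, L x -> Rabs (phi x) <= K * N x).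

Definition col (a : nat -> nat -> R) (j : nat) : seqR := fun i => a i j.

Definition Mapp (a : nat -> nat -> R) (x : seqR) : seqR :=
  fun i => Series (fun j => a i j * x j).

(** For x^* in the dual, x^* o m_M is the scalar measure with atoms
    (x^* o m_M)({j}) = x^*(C_j); its variation on P(N) is
    |x^* m_M|(A) = sum_{j in A} |x^*(C_j)|.  Hence x in L^1(|x^* m_M|) iff
    sum_j |x_j| |x^*(C_j)| < oo, and int_A x d(x^* m_M) = sum_{j in A} x_j x^*(C_j). *)
Definition int_scalar (a : nat -> nat -> R) (phi : seqR -> R) (A : nat -> bool)
  (x : seqR) : R :=
  Series (fun j => if A j then x j * phi (col a j) else 0).

Definition in_l1m (L : seqR -> Prop) (N : seqR -> R) (a : nat -> nat -> R)
  (x : seqR) : Prop :=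
  (forall phi, in_dual L N phi ->
     ex_series (fun j => Rabs (x j) * Rabs (phi (col a j)))) /\
  (forall A : nat -> bool, exists v, L v /\
     forall phi, in_dual L N phi -> phi v = int_scalar a phi A x).

Definition in_lrm (L : seqR -> Prop) (N : seqR -> R) (a : nat -> nat -> R)
  (r : R) (x : seqR) : Prop :=
  in_l1m L N a (fun j => rp (Rabs (x j)) r).

Definition fin_comb (a : nat -> nat -> R) (F : list nat) (x : seqR) : seqR :=
  fun i => fold_right (fun j acc => x j * a i j + acc) 0 F.
Definition fin_sum (F : list nat) (f : nat -> R) : R :=
  fold_right (fun j acc => f j + acc) 0 F.

(* Boundedness on l^p gives the other conditions at once: tested against a functional of
   the dual, M x becomes the scalar series sum_j x_j x^*(C_j), and on finitely supported
   vectors it is the estimate (e). Conversely (e) bounds the finite sections of M uniformly,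
   and the Fatou property carries the bound to the limit M x. Conditions (c) and (d) only
   say that M maps nonnegative vectors of l^p into l(c) with absolutely convergent rows;
   boundedness then follows by a gliding hump. If the finite sections were unbounded, blocks
   w_k with disjoint supports, norm at most 1 and weights c_k <= 2^-k would glue to some
   x = sum_k c_k w_k in l^p with ||M x|| > k for all k. To see this one looks at finitely
   many rows only (Fatou again), where the later blocks are negligible because each row
   functional is bounded on l^p, by the same argument applied to a single row. *)
From Stdlib Require Import Reals List Lra Lia Arith.
From Stdlib Require Import Classical ClassicalEpsilon FunctionalExtensionality.
From Coquelicot Require Import Coquelicot.
Open Scope R_scope.

Fixpoint psum (f : nat -> R) (n : nat) : R :=
  match n with O => 0 | S n => psum f n + f n end.

Lemma psum_S f n : psum f (S n) = psum f n + f n.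
Proof. reflexivity. Qed.

Lemma psum_ext f g n : (forall j, (j < n)%nat -> f j = g j) -> psum f n = psum g n.
Proof. induction n; intros H; simpl; auto. rewrite IHn, H; auto. Qed.

Lemma psum_le f g n : (forall j, (j < n)%nat -> f j <= g j) -> psum f n <= psum g n.
Proof.
  induction n; intros H; simpl; [lra|].
  assert (psum f n <= psum g n) by (apply IHn; intros; apply H; lia).
  pose proof (H n (Nat.lt_succ_diag_r n)). lra.
Qed.

Lemma psum_nonneg f n : (forall j, 0 <= f j) -> 0 <= psum f n.
Proof. induction n; intros H; simpl; [lra|]. pose proof (H n). specialize (IHn H). lra. Qed.

Lemma psum_mono f n m : (forall j, 0 <= f j) -> (n <= m)%nat -> psum f n <= psum f m.
Proof. intros H Hnm. induction Hnm; simpl; [lra|]. specialize (H m). lra. Qed.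

Lemma psum_plus f g n : psum (fun j => f j + g j) n = psum f n + psum g n.
Proof. induction n; simpl; lra. Qed.

Lemma psum_minus f g n : psum (fun j => f j - g j) n = psum f n - psum g n.
Proof. induction n; simpl; lra. Qed.

Lemma psum_scal c f n : psum (fun j => c * f j) n = c * psum f n.
Proof. induction n; simpl; [ring|]. rewrite IHn. ring. Qed.

Lemma psum_zero f n : (forall j, (j < n)%nat -> f j = 0) -> psum f n = 0.
Proof. induction n; intros H; simpl; auto. rewrite IHn, H; auto. ring. Qed.

Lemma psum_tail f n m :
  (forall j, (n <= j)%nat -> f j = 0) -> (n <= m)%nat -> psum f m = psum f n.
Proof. intros H Hnm. induction Hnm as [|m Hnm IH]; auto. simpl. rewrite IH, H by lia. ring. Qed.

Lemma psum_le_support g m M :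
  (forall j, 0 <= g j) -> (forall j, (m <= j)%nat -> g j = 0) -> psum g M <= psum g m.
Proof.
  intros H0 Hs. destruct (le_lt_dec M m).
  - apply psum_mono; auto.
  - rewrite (psum_tail g m M); auto; [lra | lia].
Qed.

Lemma psum_delta j0 c m :
  (j0 < m)%nat -> psum (fun j => if Nat.eq_dec j j0 then c else 0) m = c.
Proof.
  intros H. induction H; simpl.
  - rewrite psum_zero; [destruct (Nat.eq_dec j0 j0); [ring|congruence]|].
    intros j Hj. destruct (Nat.eq_dec j j0); auto; lia.
  - rewrite IHle. destruct (Nat.eq_dec m j0); [lia|ring].
Qed.

Lemma geom_psum K : psum (fun k => (/ 2) ^ k) K = 2 - 2 * (/ 2) ^ K.
Proof. induction K; simpl; [ring|]. rewrite IHK. field. Qed.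

Lemma sum_n_psum f n : sum_n f n = psum f (S n).
Proof.
  induction n.
  - rewrite sum_O. simpl. rewrite Rplus_0_l. reflexivity.
  - rewrite sum_Sn, IHn. reflexivity.
Qed.

Lemma is_series_psum f l : is_series f l <-> is_lim_seq (psum f) l.
Proof.
  split; intro H.
  - apply is_lim_seq_incr_1.
    apply (is_lim_seq_ext (sum_n f)); [intros; apply sum_n_psum | exact H].
  - apply is_lim_seq_incr_1 in H. change (is_lim_seq (sum_n f) l).
    apply (is_lim_seq_ext (fun n => psum f (S n))); [intros; symmetry; apply sum_n_psum | exact H].
Qed.

Lemma is_series_finite_support f n :
  (forall j, (n <= j)%nat -> f j = 0) -> is_series f (psum f n).
Proof.
  intros H. apply is_series_psum.
  apply is_lim_seq_ext_loc with (fun _ => psum f n); [|apply is_lim_seq_const].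
  exists n. intros m Hm. symmetry; apply psum_tail; auto.
Qed.

Lemma Series_finite_support f n :
  (forall j, (n <= j)%nat -> f j = 0) -> Series f = psum f n.
Proof. intros H. apply is_series_unique, is_series_finite_support, H. Qed.

Lemma ex_series_psum_bounded f B :
  (forall j, 0 <= f j) -> (forall n, psum f n <= B) -> ex_series f.
Proof.
  intros H0 HB.
  assert (Hi : forall n, psum f n <= psum f (S n)) by (intros; apply psum_mono; auto).
  destruct (ex_lim_seq_incr _ Hi) as [l Hl].
  assert (Hle : Rbar_le l B).
  { apply (is_lim_seq_le (psum f) (fun _ => B) l B); auto. apply is_lim_seq_const. }
  assert (Hge : Rbar_le 0 l).
  { apply (is_lim_seq_le (fun _ => 0) (psum f) 0 l); auto.
    - intros; apply psum_nonneg; auto.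
    - apply is_lim_seq_const. }
  destruct l as [l| |]; simpl in *; try contradiction.
  exists l. apply is_series_psum. exact Hl.
Qed.

Lemma psum_le_Series f n : (forall j, 0 <= f j) -> ex_series f -> psum f n <= Series f.
Proof.
  intros H0 [l Hl]. rewrite (is_series_unique _ _ Hl). apply is_series_psum in Hl.
  apply is_lim_seq_incr_compare; auto. intros; apply psum_mono; auto.
Qed.

Lemma Series_le_psum_bound f B : (forall n, psum f n <= B) -> ex_series f -> Series f <= B.
Proof.
  intros HB [l Hl]. rewrite (is_series_unique _ _ Hl). apply is_series_psum in Hl.
  apply (is_lim_seq_le (psum f) (fun _ => B) l B); auto. apply is_lim_seq_const.
Qed.

Lemma ex_series_le_nonneg (u v : nat -> R) :
  (forall n, 0 <= u n <= v n) -> ex_series v -> ex_series u.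
Proof.
  intros H Hv. apply (ex_series_le (V := R_CompleteNormedModule)) with v; auto.
  intros n. change (Rabs (u n) <= v n). rewrite Rabs_right by (apply Rle_ge, H). apply H.
Qed.

Lemma is_lim_seq_uniform_finite (u : nat -> seqR) (y : seqR) :
  (forall i, is_lim_seq (fun n => u n i) (y i)) ->
  forall k eps, 0 < eps -> exists M, forall m, (M <= m)%nat ->
    forall i, (i < k)%nat -> Rabs (u m i - y i) < eps.
Proof.
  intros H k eps He. induction k as [|k [M1 HM1]]; [exists O; intros; lia|].
  pose proof (H k) as Hk. apply is_lim_seq_spec in Hk.
  destruct (Hk (mkposreal eps He)) as [M2 HM2]. exists (max M1 M2). intros m Hm i Hi.
  destruct (Nat.eq_dec i k); [subst; apply HM2; lia | apply HM1; lia].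
Qed.

Lemma is_lim_seq_inv_succ : is_lim_seq (fun k => / INR (S k)) 0.
Proof.
  assert (H : is_lim_seq (fun k => INR (S k)) p_infty).
  { apply (is_lim_seq_incr_1 INR). apply is_lim_seq_INR. }
  apply (is_lim_seq_inv _ _ H). discriminate.
Qed.

Lemma Rmax_abs_sub_le u y e : Rabs (u - y) < e -> Rmax 0 (Rabs y - e) <= Rabs u.
Proof.
  intros H. apply Rmax_lub; [apply Rabs_pos|].
  pose proof (Rabs_triang u (y - u)) as Ht. replace (u + (y - u)) with y in Ht by ring.
  rewrite Rabs_minus_sym in Ht. lra.
Qed.

Lemma fin_sum_app l1 l2 f : fin_sum (l1 ++ l2) f = fin_sum l1 f + fin_sum l2 f.
Proof. induction l1; simpl; [ring|]. unfold fin_sum in *. simpl. rewrite IHl1. ring. Qed.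

Lemma fin_sum_seq0 f m : fin_sum (seq 0 m) f = psum f m.
Proof.
  induction m; [reflexivity|].
  rewrite seq_S, fin_sum_app, IHm. unfold fin_sum; simpl. ring.
Qed.

Lemma list_upper_bound (F : list nat) : exists m, forall j, In j F -> (j < m)%nat.
Proof.
  induction F as [|j0 F [m Hm]]; [exists O; intros j []|].
  exists (S (max j0 m)). intros j [<-|Hj]; [lia|]. specialize (Hm j Hj). lia.
Qed.

Lemma fin_sum_NoDup F f m : NoDup F -> (forall j, In j F -> (j < m)%nat) ->
  fin_sum F f = psum (fun j => if in_dec Nat.eq_dec j F then f j else 0) m.
Proof.
  induction F as [|j0 F IH]; intros HD Hm.
  - simpl. rewrite psum_zero; auto.
  - inversion HD; subst. change (fin_sum (j0 :: F) f) with (f j0 + fin_sum F f).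
    rewrite IH by (auto; intros; apply Hm; right; auto).
    rewrite <- (psum_delta j0 (f j0) m) at 1 by (apply Hm; left; auto).
    rewrite <- psum_plus. apply psum_ext. intros j _.
    destruct (Nat.eq_dec j j0), (in_dec Nat.eq_dec j (j0 :: F)), (in_dec Nat.eq_dec j F).
    all: try (subst; ring); exfalso; subst; simpl in *; intuition.
Qed.

Lemma rp_nonneg a r : 0 <= rp a r.
Proof. unfold rp. destruct (Rle_dec a 0); [lra|]. unfold Rpower. left; apply exp_pos. Qed.

Lemma rp_zero r : rp 0 r = 0.
Proof. unfold rp. destruct (Rle_dec 0 0); lra. Qed.

Lemma rp_pos a r : 0 < a -> rp a r = Rpower a r.
Proof. intros. unfold rp. destruct (Rle_dec a 0); [lra|auto]. Qed.

Lemma rp_pos_lt a r : 0 < a -> 0 < rp a r.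
Proof. intros. rewrite rp_pos by auto. apply exp_pos. Qed.

Lemma rp_one r : rp 1 r = 1.
Proof. rewrite rp_pos by lra. unfold Rpower. rewrite ln_1, Rmult_0_r. apply exp_0. Qed.

Lemma rp_mono a b r : 0 < r -> 0 <= a <= b -> rp a r <= rp b r.
Proof.
  intros Hr [Ha Hab]. destruct (Req_dec a 0).
  - subst. rewrite rp_zero. apply rp_nonneg.
  - rewrite !rp_pos by lra. apply Rle_Rpower_l; lra.
Qed.

Lemma rp_strict a b r : 0 < r -> 0 <= a < b -> rp a r < rp b r.
Proof.
  intros Hr [Ha Hab]. destruct (Req_dec a 0).
  - subst. rewrite rp_zero. apply rp_pos_lt; lra.
  - rewrite !rp_pos by lra. apply Rlt_Rpower_l; lra.
Qed.

Lemma rp_le_inv a b r : 0 < r -> 0 <= a -> 0 <= b -> rp a r <= rp b r -> a <= b.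
Proof.
  intros Hr Ha Hb H. destruct (Rle_lt_dec a b); auto.
  pose proof (rp_strict b a r Hr (conj Hb r0)). lra.
Qed.

Lemma rp_inv a r : 0 < r -> 0 <= a -> rp (rp a r) (/ r) = a.
Proof.
  intros Hr Ha. destruct (Req_dec a 0); [subst; rewrite !rp_zero; auto|].
  rewrite (rp_pos a) by lra. rewrite rp_pos by apply exp_pos.
  rewrite Rpower_mult, Rinv_r by lra. apply Rpower_1; lra.
Qed.

Lemma rp_inv' a r : 0 < r -> 0 <= a -> rp (rp a (/ r)) r = a.
Proof.
  intros Hr Ha. rewrite <- (Rinv_inv r) at 2. apply rp_inv; auto.
  apply Rinv_0_lt_compat; auto.
Qed.

Lemma rp_le_root a S r : 0 < r -> 0 <= a -> 0 <= S -> rp a r <= S -> a <= rp S (/ r).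
Proof. intros Hr Ha HS H. apply (rp_le_inv _ _ r); auto using rp_nonneg. rewrite rp_inv'; auto. Qed.

Lemma rp_mul a b r : 0 <= a -> 0 <= b -> rp (a * b) r = rp a r * rp b r.
Proof.
  intros Ha Hb. destruct (Req_dec a 0); [subst; rewrite Rmult_0_l, !rp_zero; ring|].
  destruct (Req_dec b 0); [subst; rewrite Rmult_0_r, !rp_zero; ring|].
  rewrite !rp_pos by nra. symmetry; apply Rpower_mult_distr; lra.
Qed.

Lemma rp_Rinv s r : 0 < s -> rp (/ s) r = / rp s r.
Proof.
  intros Hs. rewrite !rp_pos by (auto; apply Rinv_0_lt_compat; auto). unfold Rpower.
  rewrite ln_Rinv, <- exp_Ropp by auto. f_equal; ring.
Qed.

Lemma rp_div z s r : 0 <= z -> 0 < s -> rp (z / s) r = rp z r / rp s r.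
Proof.
  intros. unfold Rdiv. rewrite rp_mul, rp_Rinv; auto.
  left; apply Rinv_0_lt_compat; auto.
Qed.

Lemma rp_le_self a r : 1 <= r -> 0 <= a <= 1 -> rp a r <= a.
Proof.
  intros Hr [Ha Ha1]. destruct (Req_dec a 0); [subst; rewrite rp_zero; lra|].
  rewrite rp_pos by lra. replace a with (Rpower a 1) at 2 by (apply Rpower_1; lra).
  assert (ln a <= 0) by (rewrite <- ln_1; apply ln_le; lra).
  unfold Rpower. destruct (Req_dec (r * ln a) (1 * ln a)) as [E|E]; [rewrite E; lra|].
  left; apply exp_increasing. nra.
Qed.

Definition trunc (n : nat) (x : seqR) : seqR := fun j => if lt_dec j n then x j else 0.
Definition tail_seq (n : nat) (x : seqR) : seqR := fun j => if lt_dec j n then 0 else x j.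

Lemma trunc_add_tail n x j : x j = trunc n x j + tail_seq n x j.
Proof. unfold trunc, tail_seq. destruct (lt_dec j n); ring. Qed.

Lemma seq_add_trunc_tail n x : seq_add (trunc n x) (tail_seq n x) = x.
Proof. apply functional_extensionality; intro j. symmetry; apply trunc_add_tail. Qed.

Lemma in_l1_trunc n x : in_l1 (trunc n x).
Proof.
  exists (psum (fun j => Rabs (trunc n x j)) n). apply is_series_finite_support.
  intros j Hj. unfold trunc. destruct (lt_dec j n); [lia|apply Rabs_R0].
Qed.

Lemma in_lp_trunc p n x : in_lp p (trunc n x).
Proof.
  exists (psum (fun j => rp (Rabs (trunc n x j)) p) n). apply is_series_finite_support.
  intros j Hj. unfold trunc. destruct (lt_dec j n); [lia|]. rewrite Rabs_R0. apply rp_zero.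
Qed.

Lemma in_lp_dom p x z : 0 < p -> in_lp p x -> (forall j, Rabs (z j) <= Rabs (x j)) -> in_lp p z.
Proof.
  intros Hp Hx H. apply ex_series_le_nonneg with (fun j => rp (Rabs (x j)) p); auto.
  intros n. split; [apply rp_nonneg|]. apply rp_mono; auto. split; auto. apply Rabs_pos.
Qed.

Lemma in_lp_tail p n x : 0 < p -> in_lp p x -> in_lp p (tail_seq n x).
Proof.
  intros Hp Hx. apply in_lp_dom with x; auto. intros j; unfold tail_seq.
  destruct (lt_dec j n); [rewrite Rabs_R0; apply Rabs_pos | lra].
Qed.

Lemma in_lp_of_l1 p x : 1 < p -> in_l1 x -> in_lp p x.
Proof.
  intros Hp Hx. set (M := Series (fun j => Rabs (x j))).
  assert (HM : forall j, Rabs (x j) <= M).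
  { intros j. eapply Rle_trans; [|apply (psum_le_Series _ (S j)); auto using Rabs_pos].
    simpl. pose proof (psum_nonneg (fun j => Rabs (x j)) j (fun k => Rabs_pos _)). lra. }
  clearbody M.
  apply ex_series_le_nonneg with (fun j => (1 + rp M p) * Rabs (x j));
    [|apply (ex_series_scal_l (1 + rp M p) (fun j => Rabs (x j))); auto].
  intros j. split; [apply rp_nonneg|]. pose proof (rp_nonneg M p). pose proof (Rabs_pos (x j)).
  destruct (Rle_dec (Rabs (x j)) 1).
  - assert (rp (Rabs (x j)) p <= Rabs (x j)) by (apply rp_le_self; lra).
    assert (0 <= rp M p * Rabs (x j)) by (apply Rmult_le_pos; auto). nra.
  - assert (rp (Rabs (x j)) p <= rp M p) by (apply rp_mono; [lra | split; [lra | apply HM]]).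
    assert (rp M p * 1 <= rp M p * Rabs (x j)) by (apply Rmult_le_compat_l; lra). nra.
Qed.

Lemma lp_norm_nonneg p x : 0 <= lp_norm p x.
Proof. apply rp_nonneg. Qed.

Lemma lp_norm_tail_small p x : 1 < p -> in_lp p x ->
  forall eps, 0 < eps -> exists n0, forall n, (n0 <= n)%nat -> lp_norm p (tail_seq n x) <= eps.
Proof.
  intros Hp Hx eps He. set (f := fun j => rp (Rabs (x j)) p).
  pose proof (Series_correct _ Hx) as Hs. fold f in Hs.
  pose proof Hs as Hlim. apply is_series_psum, is_lim_seq_spec in Hlim.
  assert (Hep : 0 < rp eps p) by (apply rp_pos_lt; auto).
  destruct (Hlim (mkposreal _ Hep)) as [n0 Hn0]. exists n0. intros n Hn.
  specialize (Hn0 n Hn). simpl in Hn0.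
  assert (Ht : is_series (fun j => rp (Rabs (tail_seq n x j)) p) (Series f - psum f n)).
  { apply (is_series_ext (fun j => f j - trunc n f j)).
    - intros j. unfold f, trunc, tail_seq. simpl.
      destruct (lt_dec j n); [rewrite Rabs_R0, rp_zero|]; ring.
    - apply (is_series_minus (V := R_NormedModule)); auto.
      replace (psum f n) with (psum (trunc n f) n).
      + apply is_series_finite_support. intros j Hj; unfold trunc. destruct (lt_dec j n); auto; lia.
      + apply psum_ext. intros j Hj; unfold trunc. destruct (lt_dec j n); auto; lia. }
  unfold lp_norm. rewrite (is_series_unique _ _ Ht).
  pose proof (psum_le_Series f n (fun j => rp_nonneg _ _) Hx).
  rewrite <- (rp_inv eps p) by lra. apply rp_mono; [apply Rinv_0_lt_compat; lra|].
  apply Rabs_def2 in Hn0. lra.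
Qed.

Lemma is_lim_seq_tail_bound p x (u : nat -> R) l c : 1 < p -> in_lp p x -> 0 <= c ->
  (forall n, Rabs (u n - l) <= c * lp_norm p (tail_seq n x)) -> is_lim_seq u l.
Proof.
  intros Hp Hx Hc H. apply is_lim_seq_spec. intros eps. pose proof (cond_pos eps).
  destruct (lp_norm_tail_small p x Hp Hx (eps / (2 * (c + 1)))) as [n0 Hn0].
  { apply Rdiv_lt_0_compat; lra. }
  exists n0. intros n Hn. eapply Rle_lt_trans; [apply H|]. specialize (Hn0 n Hn).
  apply Rle_lt_trans with ((c + 1) * (eps / (2 * (c + 1)))).
  - apply Rmult_le_compat; try lra. apply lp_norm_nonneg.
  - replace ((c + 1) * (eps / (2 * (c + 1)))) with (eps / 2) by (field; lra). lra.
Qed.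

(* Meant for [z >= 0]: negative coordinates count as 0. *)
Definition lp_norm_upto (p : R) (m : nat) (z : seqR) : R :=
  rp (psum (fun j => rp (z j) p) m) (/ p).

Lemma lp_norm_upto_nonneg p m z : 0 <= lp_norm_upto p m z.
Proof. apply rp_nonneg. Qed.

Lemma coord_le_lp_norm_upto p m z j :
  0 < p -> (forall k, 0 <= z k) -> (j < m)%nat -> z j <= lp_norm_upto p m z.
Proof.
  intros Hp Hz Hj. apply rp_le_root; auto.
  - apply psum_nonneg; intros; apply rp_nonneg.
  - clear -Hj. induction Hj; simpl.
    + pose proof (psum_nonneg (fun j => rp (z j) p) j (fun k => rp_nonneg _ _)). lra.
    + pose proof (rp_nonneg (z m) p). lra.
Qed.

Lemma lp_norm_upto_le p x z m : 0 < p -> in_lp p x ->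
  (forall j, 0 <= z j <= Rabs (x j)) -> lp_norm_upto p m z <= lp_norm p x.
Proof.
  intros Hp Hx Hz. apply rp_mono; [apply Rinv_0_lt_compat; lra|].
  split; [apply psum_nonneg; intros; apply rp_nonneg|].
  eapply Rle_trans; [|apply (psum_le_Series _ m (fun j => rp_nonneg _ _) Hx)].
  apply psum_le. intros; apply rp_mono; auto; apply Hz.
Qed.

Lemma lp_norm_upto_eq0 p m z : 0 < p -> (forall j, 0 <= z j) ->
  lp_norm_upto p m z = 0 -> forall j, (j < m)%nat -> z j = 0.
Proof.
  intros Hp Hz H j Hj. apply Rle_antisym; auto.
  rewrite <- H. apply coord_le_lp_norm_upto; auto.
Qed.

Lemma psum_trunc_le p g n m z : (forall j, 0 <= g j) -> (forall j, 0 <= z j) -> 0 < p ->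
  psum (fun j => g j * trunc n z j) m <= psum g n * lp_norm_upto p m z.
Proof.
  intros Hg Hz Hp.
  apply Rle_trans with (psum (fun j => if lt_dec j n then lp_norm_upto p m z * g j else 0) m).
  { apply psum_le. intros j Hj. unfold trunc. destruct (lt_dec j n); [|lra].
    rewrite Rmult_comm. apply Rmult_le_compat_r; auto. apply coord_le_lp_norm_upto; auto. }
  eapply Rle_trans.
  - apply psum_le_support with (m := n).
    + intros j. destruct (lt_dec j n); [apply Rmult_le_pos; auto using lp_norm_upto_nonneg | lra].
    + intros j Hj. destruct (lt_dec j n); auto; lia.
  - rewrite (psum_ext _ (fun j => lp_norm_upto p m z * g j)), psum_scal; [lra|].
    intros j Hj. destruct (lt_dec j n); [ring | lia].
Qed.

Lemma psum_rp_div_lp_norm_upto p m z : 0 < p -> (forall j, 0 <= z j) -> 0 < lp_norm_upto p m z ->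
  psum (fun j => rp (z j / lp_norm_upto p m z) p) m = 1.
Proof.
  intros Hp Hz Hs. set (s := lp_norm_upto p m z) in *.
  assert (Hrs : rp s p = psum (fun j => rp (z j) p) m).
  { unfold s, lp_norm_upto. apply rp_inv'; [lra|]. apply psum_nonneg; intros; apply rp_nonneg. }
  assert (0 < rp s p) by (apply rp_pos_lt; auto).
  rewrite (psum_ext _ (fun j => / rp s p * rp (z j) p))
    by (intros; rewrite rp_div; auto; unfold Rdiv; ring).
  rewrite psum_scal, <- Hrs. field. lra.
Qed.

Definition unit_block (p : R) (n m : nat) (w : seqR) : Prop :=
  (n < m)%nat /\ (forall j, 0 <= w j) /\ (forall j, (j < n \/ m <= j)%nat -> w j = 0) /\
  (forall M, psum (fun j => rp (w j) p) M <= 1).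

Section HeavyBlock.
Variable p : R.
Hypothesis Hp : 1 < p.
Variable Phi : nat -> seqR -> R.
Hypothesis Phi_local : forall m z w, (forall j, (j < m)%nat -> z j = w j) -> Phi m z = Phi m w.
Hypothesis Phi_div : forall m z s, 0 < s -> Phi m (fun j => z j / s) = Phi m z / s.
Hypothesis Phi_split : forall m n z, Phi m z <= Phi m (trunc n z) + Phi m (tail_seq n z).
Hypothesis Phi_head : forall n, exists H, forall m z, (forall j, 0 <= z j) ->
  Phi m (trunc n z) <= H * lp_norm_upto p m z.
Hypothesis Phi_null : forall m z, (forall j, (j < m)%nat -> z j = 0) -> Phi m z <= 0.
Hypothesis Phi_unbounded : forall C, 0 < C -> exists m z, (forall j, 0 <= z j) /\
  C * lp_norm_upto p m z < Phi m z.

(* The first [n] coordinates only contribute a bounded amount, so a vector witnessing a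
   large enough ratio still does so after its head is removed; normalising the tail gives
   the block. *)
Lemma exists_heavy_block n R : exists m w, unit_block p n m w /\ R < Phi m w.
Proof.
  destruct (Phi_head n) as [H HH]. set (C := Rmax H 0 + Rmax R 0 + 1).
  pose proof (Rmax_l H 0). pose proof (Rmax_r H 0). pose proof (Rmax_l R 0). pose proof (Rmax_r R 0).
  destruct (Phi_unbounded C ltac:(unfold C; lra)) as [m [z [Hz0 Hz]]].
  set (s := lp_norm_upto p m z) in Hz.
  assert (Hs : 0 < s).
  { destruct (lp_norm_upto_nonneg p m z) as [|E]; auto. exfalso.
    pose proof (Phi_null m z (lp_norm_upto_eq0 p m z ltac:(lra) Hz0 (eq_sym E))).
    fold s in E. rewrite <- E in Hz. lra. }
  assert (Htail : (Rmax R 0 + 1) * s < Phi m (tail_seq n z)).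
  { pose proof (Phi_split m n z) as Hsplit. pose proof (HH m z Hz0) as Hhead. fold s in Hhead.
    assert (H * s <= Rmax H 0 * s) by (apply Rmult_le_compat_r; lra). unfold C in Hz. nra. }
  assert (Hnm : (n < m)%nat).
  { destruct (le_lt_dec m n); auto. exfalso.
    assert (Phi m (tail_seq n z) <= 0).
    { apply Phi_null. intros j Hj; unfold tail_seq. destruct (lt_dec j n); auto; lia. }
    nra. }
  set (w := fun j => if lt_dec j m then tail_seq n z j / s else 0).
  assert (Hw : forall j, 0 <= w j <= if lt_dec j m then z j / s else 0).
  { intros j; unfold w, tail_seq. assert (0 <= z j / s) by (apply Rdiv_le_0_compat; auto).
    destruct (lt_dec j m), (lt_dec j n); unfold Rdiv in *; rewrite ?Rmult_0_l; lra. }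
  exists m, w. split; [split; [|split; [|split]]|]; auto.
  - intros j; apply Hw.
  - intros j Hj; unfold w, tail_seq. destruct (lt_dec j m), (lt_dec j n); try lia; auto.
    unfold Rdiv; ring.
  - intros M. eapply Rle_trans.
    { apply psum_le_support with (m := m); [intros; apply rp_nonneg|].
      intros j Hj. unfold w. destruct (lt_dec j m); [lia|apply rp_zero]. }
    rewrite <- (psum_rp_div_lp_norm_upto p m z) by (auto; lra). fold s.
    apply psum_le. intros j Hj. specialize (Hw j). destruct (lt_dec j m); [|lia].
    apply rp_mono; lra.
  - rewrite (Phi_local m w (fun j => tail_seq n z j / s)).
    + rewrite Phi_div; auto. apply Rmult_lt_reg_r with s; auto.
      unfold Rdiv. rewrite Rmult_assoc, Rinv_l, Rmult_1_r by lra. nra.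
    + intros j Hj. unfold w. destruct (lt_dec j m); auto; lia.
Qed.

End HeavyBlock.

Definition hump_block (p : R) (k n : nat) (c : R) (m : nat) (w : seqR) : Prop :=
  0 < c /\ c <= (/ 2) ^ k /\ unit_block p n m w.

Definition hump_sum (cc : nat -> R) (ww : nat -> seqR) (k : nat) : seqR :=
  fun j => psum (fun l => cc l * ww l j) k.

(* Each coordinate [j] is only touched by the blocks [0..j]. *)
Definition hump_limit (cc : nat -> R) (ww : nat -> seqR) : seqR :=
  fun j => hump_sum cc ww (S j) j.

Lemma dependent_choice (A : Type) (P : nat -> A -> A -> Prop) (s0 : A) :
  (forall k s, exists s', P k s s') ->
  exists f : nat -> A, f O = s0 /\ forall k, P k (f k) (f (S k)).
Proof.
  intros H.
  destruct (choice (fun ks s' => P (fst ks) (snd ks) s') (fun ks => H (fst ks) (snd ks)))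
    as [g Hg].
  exists (fix f k := match k with O => s0 | S k => g (k, f k) end).
  split; [reflexivity|]. intros k. exact (Hg (k, _)).
Qed.

(* The state of the construction is (start of the next block, partial sum, row cutoff). *)
Lemma hump_build p (Q : nat -> nat -> seqR -> nat -> R -> nat -> seqR -> nat -> Prop) :
  (forall k n X r, exists c m w r',
     hump_block p k n c m w /\ (r <= r')%nat /\ Q k n X r c m w r') ->
  exists cc nn rr ww, forall k,
    hump_block p k (nn k) (cc k) (nn (S k)) (ww k) /\ (rr k <= rr (S k))%nat /\
    Q k (nn k) (hump_sum cc ww k) (rr k) (cc k) (nn (S k)) (ww k) (rr (S k)).
Proof.
  intros Hstep.
  set (move := fun k (s s' : nat * seqR * nat) (cw : R * seqR) =>
    hump_block p k (fst (fst s)) (fst cw) (fst (fst s')) (snd cw) /\ (snd s <= snd s')%nat /\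
    snd (fst s') = (fun j => snd (fst s) j + fst cw * snd cw j) /\
    Q k (fst (fst s)) (snd (fst s)) (snd s) (fst cw) (fst (fst s')) (snd cw) (snd s')).
  destruct (dependent_choice _ (fun k s s' => exists cw, move k s s' cw) (O, seq_zero, O))
    as [f [Hf0 Hf]].
  { intros k [[n X] r]. destruct (Hstep k n X r) as [c [m [w [r' [Hb [Hr HQ]]]]]].
    exists (m, (fun j => X j + c * w j), r'), (c, w). unfold move; simpl; auto. }
  destruct (choice (fun k => move k (f k) (f (S k))) Hf) as [g Hg].
  set (cc := fun k => fst (g k)). set (ww := fun k => snd (g k)).
  assert (HX : forall k, snd (fst (f k)) = hump_sum cc ww k).
  { induction k; [rewrite Hf0; reflexivity|].
    destruct (Hg k) as [_ [_ [E _]]]. rewrite E, IHk. reflexivity. }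
  exists cc, (fun k => fst (fst (f k))), (fun k => snd (f k)), ww.
  intros k. destruct (Hg k) as [Hb [Hr [_ HQ]]]. rewrite HX in HQ. auto.
Qed.

Section GlidingHump.
Variable p : R.
Hypothesis Hp : 1 < p.
Variables (cc : nat -> R) (nn : nat -> nat) (ww : nat -> seqR).
Hypothesis Hblk : forall k, hump_block p k (nn k) (cc k) (nn (S k)) (ww k).

Lemma nn_lt k : (nn k < nn (S k))%nat. Proof. apply Hblk. Qed.
Lemma cc_pos k : 0 < cc k. Proof. apply Hblk. Qed.
Lemma cc_le k : cc k <= (/ 2) ^ k. Proof. apply Hblk. Qed.
Lemma ww_nonneg k j : 0 <= ww k j. Proof. apply Hblk. Qed.
Lemma ww_support k j : (j < nn k \/ nn (S k) <= j)%nat -> ww k j = 0. Proof. apply Hblk. Qed.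
Lemma ww_norm k M : psum (fun j => rp (ww k j) p) M <= 1. Proof. apply Hblk. Qed.

Lemma nn_ge k : (k <= nn k)%nat.
Proof. induction k; [lia|]. pose proof (nn_lt k). lia. Qed.

Lemma nn_mono k l : (k <= l)%nat -> (nn k <= nn l)%nat.
Proof. intros H. induction H; [lia|]. pose proof (nn_lt m). lia. Qed.

Lemma hump_sum_S k j : hump_sum cc ww (S k) j = hump_sum cc ww k j + cc k * ww k j.
Proof. reflexivity. Qed.

Lemma hump_sum_nonneg k j : 0 <= hump_sum cc ww k j.
Proof. apply psum_nonneg. intros l. pose proof (cc_pos l). pose proof (ww_nonneg l j). nra. Qed.

Lemma hump_sum_support k j : (nn k <= j)%nat -> hump_sum cc ww k j = 0.
Proof.
  intros H. apply psum_zero. intros l Hl.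
  pose proof (nn_mono (S l) k Hl). rewrite ww_support by lia. ring.
Qed.

Lemma hump_sum_stable k l j : (j < nn k)%nat -> (k <= l)%nat -> hump_sum cc ww l j = hump_sum cc ww k j.
Proof.
  intros Hj H. induction H; auto. rewrite hump_sum_S, IHle, ww_support; [ring|].
  left. pose proof (nn_mono k m H). lia.
Qed.

Lemma hump_sum_mono k l j : (k <= l)%nat -> hump_sum cc ww k j <= hump_sum cc ww l j.
Proof.
  intros H. induction H; [lra|]. rewrite hump_sum_S.
  pose proof (cc_pos m). pose proof (ww_nonneg m j). nra.
Qed.

Lemma hump_limit_eq K j : (j < nn K)%nat -> hump_limit cc ww j = hump_sum cc ww K j.
Proof.
  intros Hj. unfold hump_limit. pose proof (nn_ge (S j)). destruct (le_lt_dec K (S j)).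
  - apply hump_sum_stable; auto.
  - symmetry. apply hump_sum_stable; lia.
Qed.

Lemma hump_limit_nonneg j : 0 <= hump_limit cc ww j.
Proof. apply hump_sum_nonneg. Qed.

Lemma hump_sum_le_limit k j : hump_sum cc ww k j <= hump_limit cc ww j.
Proof.
  destruct (le_lt_dec k (S j)).
  - apply hump_sum_mono; auto.
  - rewrite (hump_limit_eq k j); [lra|]. pose proof (nn_ge k). lia.
Qed.

Lemma hump_block_le_limit k j : cc k * ww k j <= hump_limit cc ww j.
Proof.
  eapply Rle_trans; [|apply (hump_sum_le_limit (S k))].
  rewrite hump_sum_S. pose proof (hump_sum_nonneg k j). lra.
Qed.

(* The blocks have disjoint supports, so their p-th powers add up. *)
Lemma hump_sum_rp_le K M :
  psum (fun j => rp (hump_sum cc ww K j) p) M <= psum (fun k => (/ 2) ^ k) K.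
Proof.
  induction K.
  - rewrite psum_zero; [simpl; lra|]. intros; apply rp_zero.
  - assert (E : forall j, rp (hump_sum cc ww (S K) j) p
                          = rp (hump_sum cc ww K j) p + rp (cc K) p * rp (ww K j) p).
    { intros j. rewrite hump_sum_S. destruct (le_lt_dec (nn K) j).
      - rewrite hump_sum_support, rp_zero, !Rplus_0_l by auto.
        apply rp_mul; [left; apply cc_pos | apply ww_nonneg].
      - rewrite (ww_support K j), Rmult_0_r, Rplus_0_r, rp_zero by lia. ring. }
    rewrite psum_S, (psum_ext _ _ M (fun j _ => E j)), psum_plus, psum_scal.
    pose proof (ww_norm K M). pose proof (rp_nonneg (cc K) p).
    assert (rp (cc K) p <= (/ 2) ^ K).
    { pose proof (cc_pos K). pose proof (cc_le K).
      assert ((/ 2) ^ K <= 1) by (rewrite <- (pow1 K); apply pow_incr; lra).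
      eapply Rle_trans; [apply rp_le_self; lra | auto]. }
    nra.
Qed.

Lemma in_lp_hump_limit : in_lp p (hump_limit cc ww).
Proof.
  apply ex_series_psum_bounded with 2; [intros; apply rp_nonneg|]. intros M.
  rewrite (psum_ext _ (fun j => rp (hump_sum cc ww M j) p)).
  - eapply Rle_trans; [apply hump_sum_rp_le|]. rewrite geom_psum.
    pose proof (pow_le (/2) M). lra.
  - intros j Hj. rewrite Rabs_right by (apply Rle_ge, hump_limit_nonneg).
    rewrite (hump_limit_eq M); auto. pose proof (nn_ge M). lia.
Qed.

Lemma hump_tail_bound (g : nat -> R) D t k : (forall j, 0 <= g j) -> 0 <= D -> 0 <= t ->
  (forall l M, psum (fun j => g j * ww l j) M <= D) ->
  (forall l, (k < l)%nat -> cc l <= t * (/ 2) ^ l) ->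
  forall M, psum (fun j => g j * (hump_limit cc ww j - hump_sum cc ww (S k) j)) M
            <= D * t * (/ 2) ^ k.
Proof.
  intros Hg HD Ht Hw Hc M.
  assert (Hd : forall d, psum (fun j => g j * (hump_sum cc ww (S k + d) j - hump_sum cc ww (S k) j)) M
                         <= D * t * ((/ 2) ^ k - (/ 2) ^ (k + d))).
  { induction d.
    - rewrite !Nat.add_0_r, psum_zero; [lra|]. intros; ring.
    - replace (S k + S d)%nat with (S (S k + d)) by lia.
      rewrite (psum_ext _ (fun j => g j * (hump_sum cc ww (S k + d) j - hump_sum cc ww (S k) j)
                                    + cc (S k + d)%nat * (g j * ww (S k + d)%nat j)))
        by (intros; rewrite hump_sum_S; ring).
      rewrite psum_plus, psum_scal.
      pose proof (Hw (S k + d)%nat M). pose proof (Hc (S k + d)%nat ltac:(lia)).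
      pose proof (cc_pos (S k + d)).
      assert (Hblock : cc (S k + d)%nat * psum (fun j => g j * ww (S k + d)%nat j) M
                       <= t * (/ 2) ^ (S k + d) * D).
      { apply Rmult_le_compat; auto; [lra|].
        apply psum_nonneg. intros; apply Rmult_le_pos; auto; apply ww_nonneg. }
      replace (k + S d)%nat with (S (k + d)) by lia.
      replace (S k + d)%nat with (S (k + d)) in Hblock by lia. simpl in *. lra. }
  rewrite (psum_ext _ (fun j => g j * (hump_sum cc ww (S k + M) j - hump_sum cc ww (S k) j))).
  - eapply Rle_trans; [apply Hd|]. pose proof (pow_le (/2) (k + M)).
    assert (0 <= D * t) by (apply Rmult_le_pos; auto). nra.
  - intros j Hj. rewrite (hump_limit_eq (S k + M)); auto. pose proof (nn_ge (S k + M)). lia.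
Qed.

End GlidingHump.

Definition Mtrunc (a : nat -> nat -> R) (m : nat) (z : seqR) : seqR := fin_comb a (seq 0 m) z.

Lemma fin_comb_cons a j F x :
  fin_comb a (j :: F) x = seq_add (seq_scal (x j) (col a j)) (fin_comb a F x).
Proof. reflexivity. Qed.

Lemma Mtrunc_apply a m z i : Mtrunc a m z i = psum (fun j => z j * a i j) m.
Proof. apply (fin_sum_seq0 (fun j => z j * a i j)). Qed.

Lemma Mtrunc_ext a m z w : (forall j, (j < m)%nat -> z j = w j) -> Mtrunc a m z = Mtrunc a m w.
Proof.
  intros H. apply functional_extensionality; intro i. rewrite !Mtrunc_apply.
  apply psum_ext. intros; rewrite H; auto.
Qed.

Lemma Mtrunc_tail a n m z :
  (forall j, (n <= j)%nat -> z j = 0) -> (n <= m)%nat -> Mtrunc a m z = Mtrunc a n z.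
Proof.
  intros H Hnm. apply functional_extensionality; intro i. rewrite !Mtrunc_apply.
  apply psum_tail; auto. intros; rewrite H; auto; ring.
Qed.

Lemma Mtrunc_add a m z w : Mtrunc a m (fun j => z j + w j) = seq_add (Mtrunc a m z) (Mtrunc a m w).
Proof.
  apply functional_extensionality; intro i. unfold seq_add. rewrite !Mtrunc_apply, <- psum_plus.
  apply psum_ext; intros; ring.
Qed.

Lemma Mtrunc_scal a m c z : Mtrunc a m (fun j => c * z j) = seq_scal c (Mtrunc a m z).
Proof.
  apply functional_extensionality; intro i. unfold seq_scal. rewrite !Mtrunc_apply, <- psum_scal.
  apply psum_ext; intros; ring.
Qed.

Lemma Mapp_finite_support a m z : (forall j, (m <= j)%nat -> z j = 0) -> Mapp a z = Mtrunc a m z.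
Proof.
  intros H. apply functional_extensionality; intro i. unfold Mapp. rewrite Mtrunc_apply.
  rewrite (Series_finite_support _ m); [apply psum_ext; intros; ring|].
  intros; rewrite H; auto; ring.
Qed.

Lemma Mapp_trunc a n x : Mapp a (trunc n x) = Mtrunc a n x.
Proof.
  rewrite (Mapp_finite_support a n).
  - apply Mtrunc_ext. intros j Hj; unfold trunc. destruct (lt_dec j n); auto; lia.
  - intros j Hj; unfold trunc. destruct (lt_dec j n); auto; lia.
Qed.

Lemma Mapp_add a x y :
  (forall i, ex_series (fun j => a i j * x j)) -> (forall i, ex_series (fun j => a i j * y j)) ->
  Mapp a (seq_add x y) = seq_add (Mapp a x) (Mapp a y).
Proof.
  intros Hx Hy. apply functional_extensionality; intro i. unfold Mapp, seq_add.
  rewrite <- Series_plus; auto. apply Series_ext; intros; ring.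
Qed.

Lemma Mapp_scal a c x : Mapp a (seq_scal c x) = seq_scal c (Mapp a x).
Proof.
  apply functional_extensionality; intro i. unfold Mapp, seq_scal.
  rewrite <- Series_scal_l. apply Series_ext; intros; ring.
Qed.

Definition unit_seq (i : nat) : seqR := fun k => if Nat.eq_dec k i then 1 else 0.
Definition seq_abs (y : seqR) : seqR := fun i => Rabs (y i).

Lemma in_l1_unit_seq i : in_l1 (unit_seq i).
Proof.
  exists (psum (fun j => Rabs (unit_seq i j)) (S i)). apply is_series_finite_support.
  intros j Hj. unfold unit_seq. destruct (Nat.eq_dec j i); [lia|apply Rabs_R0].
Qed.

Lemma trunc_S r y : trunc (S r) y = seq_add (trunc r y) (seq_scal (y r) (unit_seq r)).
Proof.
  apply functional_extensionality; intro i. unfold trunc, seq_add, seq_scal, unit_seq.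
  destruct (lt_dec i (S r)), (lt_dec i r), (Nat.eq_dec i r); subst; try lia; ring.
Qed.

Lemma trunc_0 y : trunc 0 y = seq_zero.
Proof. apply functional_extensionality; intro i. unfold trunc. destruct (lt_dec i 0); [lia|auto]. Qed.

Section BanachFunctionSpace.
Variables (L : seqR -> Prop) (N : seqR -> R).
Hypothesis HBFS : is_BFS L N.

Lemma L_zero : L seq_zero. Proof. apply HBFS. Qed.
Lemma L_add x y : L x -> L y -> L (seq_add x y). Proof. apply HBFS. Qed.
Lemma L_scal c x : L x -> L (seq_scal c x). Proof. apply HBFS. Qed.
Lemma N_nonneg x : L x -> 0 <= N x. Proof. apply HBFS. Qed.
Lemma N_eq0 x : L x -> N x = 0 -> forall i, x i = 0. Proof. apply HBFS. Qed.
Lemma N_scal c x : L x -> N (seq_scal c x) = Rabs c * N x. Proof. apply HBFS. Qed.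
Lemma N_triang x y : L x -> L y -> N (seq_add x y) <= N x + N y. Proof. apply HBFS. Qed.
Lemma L_solid x y : L x -> (forall i, Rabs (y i) <= Rabs (x i)) -> L y.
Proof. intros. apply HBFS with x; auto. Qed.
Lemma N_solid x y : L x -> (forall i, Rabs (y i) <= Rabs (x i)) -> N y <= N x.
Proof. intros. apply HBFS; auto. Qed.

Lemma N_zero : N seq_zero = 0.
Proof.
  replace seq_zero with (seq_scal 0 seq_zero).
  - rewrite N_scal by apply L_zero. rewrite Rabs_R0; ring.
  - apply functional_extensionality; intro; unfold seq_scal, seq_zero; ring.
Qed.

Lemma N_ext x y : L x -> (forall i, Rabs (y i) = Rabs (x i)) -> N y = N x.
Proof.
  intros Hx H. assert (L y) by (apply L_solid with x; auto; intros; rewrite H; lra).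
  apply Rle_antisym; apply N_solid; auto; intros; rewrite H; lra.
Qed.

Lemma N_sub_triang x y : L x -> L y -> N (seq_add x (seq_scal (-1) y)) <= N x + N y.
Proof.
  intros. eapply Rle_trans; [apply N_triang; auto; apply L_scal; auto|].
  rewrite N_scal by auto. rewrite Rabs_left by lra. lra.
Qed.

Lemma L_abs y : L y -> L (seq_abs y).
Proof. intros. apply L_solid with y; auto. intros; unfold seq_abs; rewrite Rabs_Rabsolu; lra. Qed.

Lemma N_abs y : L y -> N (seq_abs y) = N y.
Proof. intros. apply N_ext; auto. intros; unfold seq_abs; rewrite Rabs_Rabsolu; auto. Qed.

Lemma N_trunc_le r y : L y -> N (trunc r y) <= N y.
Proof.
  intros. apply N_solid; auto. intros i; unfold trunc.
  destruct (lt_dec i r); [lra | rewrite Rabs_R0; apply Rabs_pos].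
Qed.

Hypothesis Hl1 : forall x, in_l1 x -> L x.

Lemma L_unit_seq i : L (unit_seq i). Proof. apply Hl1, in_l1_unit_seq. Qed.
Lemma L_trunc r y : L (trunc r y). Proof. apply Hl1, in_l1_trunc. Qed.

Lemma N_unit_seq_pos i : 0 < N (unit_seq i).
Proof.
  destruct (N_nonneg (unit_seq i) (L_unit_seq i)) as [|E]; auto.
  pose proof (N_eq0 (unit_seq i) (L_unit_seq i) (eq_sym E) i) as H. unfold unit_seq in H.
  destruct (Nat.eq_dec i i); [lra | congruence].
Qed.

Lemma coord_le_N y i : L y -> Rabs (y i) <= N y / N (unit_seq i).
Proof.
  intros Hy. pose proof (N_unit_seq_pos i).
  assert (Rabs (y i) * N (unit_seq i) <= N y).
  { rewrite <- N_scal by apply L_unit_seq. apply N_solid; auto.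
    intros k. unfold seq_scal, unit_seq. destruct (Nat.eq_dec k i).
    - subst. rewrite Rmult_1_r. lra.
    - rewrite Rmult_0_r, Rabs_R0. apply Rabs_pos. }
  apply Rmult_le_reg_r with (N (unit_seq i)); auto.
  unfold Rdiv. rewrite Rmult_assoc, Rinv_l; lra.
Qed.

Lemma N_trunc_le_psum r y : N (trunc r y) <= psum (fun i => Rabs (y i) * N (unit_seq i)) r.
Proof.
  induction r; [rewrite trunc_0, N_zero; simpl; lra|].
  rewrite trunc_S. eapply Rle_trans; [apply N_triang; [apply L_trunc | apply L_scal, L_unit_seq]|].
  rewrite N_scal by apply L_unit_seq. simpl. lra.
Qed.

Lemma N_trunc_mono r r' y : (r <= r')%nat -> N (trunc r y) <= N (trunc r' y).
Proof.
  intros. apply N_solid; [apply L_trunc|]. intros i; unfold trunc.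
  destruct (lt_dec i r), (lt_dec i r'); try lia; try lra. rewrite Rabs_R0; apply Rabs_pos.
Qed.

Hypothesis HF : Fatou L N.

Lemma N_trunc_approx y eps : L y -> 0 < eps -> exists r, N y - eps < N (trunc r y).
Proof.
  intros Hy He.
  destruct (HF (fun r => trunc r (seq_abs y)) (seq_abs y)) as [_ Hlim].
  - intros; apply L_trunc.
  - intros k i. unfold trunc, seq_abs.
    destruct (lt_dec i k), (lt_dec i (S k)); try lia; split; try apply Rabs_pos; lra.
  - intros i. apply is_lim_seq_ext_loc with (fun _ => seq_abs y i); [|apply is_lim_seq_const].
    exists (S i). intros n Hn. unfold trunc. destruct (lt_dec i n); auto; lia.
  - exists (N y). intros k. rewrite <- (N_abs y Hy). apply N_trunc_le, L_abs; auto.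
  - rewrite (N_abs y Hy) in Hlim. apply is_lim_seq_spec in Hlim.
    destruct (Hlim (mkposreal eps He)) as [r Hr]. exists r. specialize (Hr r (le_n r)). simpl in Hr.
    assert (N (trunc r (seq_abs y)) = N (trunc r y)).
    { apply N_ext; [apply L_trunc|]. intros i. unfold trunc, seq_abs.
      destruct (lt_dec i r); auto. rewrite Rabs_Rabsolu; auto. }
    apply Rabs_def2 in Hr. lra.
Qed.

(* Fatou's property applies to the increasing minorants (|y_i| - 1/(k+1))^+, i < k, of y,
   each of which is dominated by some |u_n|. *)
Lemma L_N_le_of_pointwise_lim (u : nat -> seqR) (y : seqR) K :
  (forall n, L (u n)) -> (forall i, is_lim_seq (fun n => u n i) (y i)) ->
  (forall n, N (u n) <= K) -> L y /\ N y <= K.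
Proof.
  intros HL Hlim HK.
  assert (Hm : forall k, exists M, forall i, (i < k)%nat -> Rabs (u M i - y i) < / INR (S k)).
  { intros k. destruct (is_lim_seq_uniform_finite u y Hlim k (/ INR (S k))) as [M HM].
    - apply Rinv_0_lt_compat, lt_0_INR; lia.
    - exists M. apply HM. lia. }
  apply choice in Hm. destruct Hm as [mk Hmk].
  set (v := fun k i => if lt_dec i k then Rmax 0 (Rabs (y i) - / INR (S k)) else 0).
  assert (Hv : forall k i, Rabs (v k i) <= Rabs (u (mk k) i)).
  { intros k i. unfold v. destruct (lt_dec i k); [|rewrite Rabs_R0; apply Rabs_pos].
    rewrite Rabs_right by (apply Rle_ge, Rmax_l). apply Rmax_abs_sub_le, Hmk; auto. }
  assert (HvL : forall k, L (v k)) by (intros; apply (L_solid (u (mk k))); auto).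
  assert (HvK : forall k, N (v k) <= K).
  { intros k. eapply Rle_trans; [apply (N_solid (u (mk k))); auto | auto]. }
  destruct (HF v (seq_abs y)) as [Hy Hl]; auto.
  - intros k i. unfold v.
    assert (/ INR (S (S k)) <= / INR (S k)).
    { apply Rinv_le_contravar; [apply lt_0_INR; lia | apply le_INR; lia]. }
    destruct (lt_dec i k), (lt_dec i (S k)); try lia; split; try apply Rmax_l; try lra.
    apply Rle_max_compat_l. lra.
  - intros i. apply is_lim_seq_ext_loc with (fun k => Rmax 0 (Rabs (y i) - / INR (S k))).
    { exists (S i). intros n Hn. unfold v. destruct (lt_dec i n); auto; lia. }
    unfold seq_abs.
    apply is_lim_seq_le_le with (fun k => Rabs (y i) - / INR (S k)) (fun _ => Rabs (y i)).
    + intros k. pose proof (Rinv_0_lt_compat (INR (S k)) (lt_0_INR (S k) (Nat.lt_0_succ k))).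
      split; [apply Rmax_r|]. apply Rmax_lub; [apply Rabs_pos | lra].
    + replace (Finite (Rabs (y i))) with (Finite (Rabs (y i) - 0)) by (f_equal; ring).
      apply is_lim_seq_minus'; [apply is_lim_seq_const | apply is_lim_seq_inv_succ].
    + apply is_lim_seq_const.
  - exists K; auto.
  - assert (Hly : L y).
    { apply (L_solid (seq_abs y)); [exact Hy|]. intros i. unfold seq_abs. rewrite Rabs_Rabsolu. lra. }
    split; auto. rewrite <- (N_abs y Hly).
    change (Rbar_le (N (seq_abs y)) K).
    apply (is_lim_seq_le (fun k => N (v k)) (fun _ => K)); auto. apply is_lim_seq_const.
Qed.

Section Matrix.
Variables (a : nat -> nat -> R) (p : R).
Hypothesis Hcol : forall j, L (col a j).
Hypothesis Hp : 1 < p.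

Definition lp_bounded : Prop :=
  (forall x, in_lp p x -> (forall i, ex_series (fun j => a i j * x j)) /\ L (Mapp a x)) /\
  (exists K, forall x, in_lp p x -> N (Mapp a x) <= K * lp_norm p x).

Definition lp_extendable : Prop :=
  exists T : seqR -> seqR,
    (forall x y, in_lp p x -> in_lp p y -> T (seq_add x y) = seq_add (T x) (T y)) /\
    (forall c x, in_lp p x -> T (seq_scal c x) = seq_scal c (T x)) /\
    (forall x, in_lp p x -> L (T x)) /\
    (exists K, forall x, in_lp p x -> N (T x) <= K * lp_norm p x) /\
    (forall x, in_l1 x -> T x = Mapp a x).

Definition lp_sub_l1m : Prop := forall x, in_lp p x -> in_l1m L N a x.

Definition l1_sub_lrm : Prop := forall x, in_l1 x -> in_lrm L N a (/ p) x /\ in_l1m L N a x.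

Definition fin_comb_estimate : Prop :=
  exists C, 0 < C /\ forall (F : list nat) (x : seqR), NoDup F -> (forall j, In j F -> 0 <= x j) ->
    N (fin_comb a F x) <= C * rp (fin_sum F (fun j => rp (x j) p)) (/ p).

Definition sections_bounded : Prop :=
  exists C, 0 < C /\ forall m z, (forall j, 0 <= z j) -> N (Mtrunc a m z) <= C * lp_norm_upto p m z.

Definition maps_nonneg_lp : Prop :=
  forall x, (forall j, 0 <= x j) -> in_lp p x ->
    (forall i, ex_series (fun j => Rabs (a i j) * x j)) /\ L (Mapp a x).

Lemma L_fin_comb F x : L (fin_comb a F x).
Proof.
  induction F; [apply L_zero|].
  rewrite fin_comb_cons. apply L_add; auto. apply L_scal; auto.
Qed.

Lemma N_fin_comb_le F x : N (fin_comb a F x) <= fin_sum F (fun j => Rabs (x j) * N (col a j)).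
Proof.
  induction F; [apply Req_le, N_zero|].
  rewrite fin_comb_cons. eapply Rle_trans; [apply N_triang; [apply L_scal; auto | apply L_fin_comb]|].
  rewrite N_scal by auto. unfold fin_sum in *; simpl. lra.
Qed.

Lemma L_Mtrunc m z : L (Mtrunc a m z). Proof. apply L_fin_comb. Qed.

Lemma N_Mtrunc_le m z : N (Mtrunc a m z) <= psum (fun j => Rabs (z j) * N (col a j)) m.
Proof. unfold Mtrunc. rewrite <- fin_sum_seq0. apply N_fin_comb_le. Qed.

Lemma N_Mtrunc_sub m z w : N (Mtrunc a m (fun j => z j - w j)) <= N (Mtrunc a m z) + N (Mtrunc a m w).
Proof.
  replace (Mtrunc a m (fun j => z j - w j)) with (seq_add (Mtrunc a m z) (seq_scal (-1) (Mtrunc a m w))).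
  - apply N_sub_triang; apply L_Mtrunc.
  - rewrite <- Mtrunc_scal, <- Mtrunc_add. apply Mtrunc_ext; intros; ring.
Qed.

Lemma N_Mtrunc_le_lp_norm C x z m :
  (forall m z, (forall j, 0 <= z j) -> N (Mtrunc a m z) <= C * lp_norm_upto p m z) -> 0 < C ->
  in_lp p x -> (forall j, 0 <= z j <= Rabs (x j)) -> N (Mtrunc a m z) <= C * lp_norm p x.
Proof.
  intros HB HC Hx Hz. eapply Rle_trans; [apply HB; intros; apply Hz|].
  apply Rmult_le_compat_l; [lra|]. apply lp_norm_upto_le; auto; lra.
Qed.

(* Splitting row [i] according to the sign of [a i j] writes its partial absolute sums as a
   difference of two coordinates of bounded sections. *)
Lemma rows_abs_summable : sections_bounded ->
  forall x, in_lp p x -> forall i, ex_series (fun j => Rabs (a i j * x j)).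
Proof.
  intros [C [HC HB]] x Hx i.
  set (zp := fun j => if Rle_dec 0 (a i j) then Rabs (x j) else 0).
  set (zn := fun j => if Rle_dec 0 (a i j) then 0 else Rabs (x j)).
  pose proof (N_unit_seq_pos i) as Hei.
  assert (Hcoord : forall z m, (forall j, 0 <= z j <= Rabs (x j)) ->
            Rabs (Mtrunc a m z i) <= C * lp_norm p x / N (unit_seq i)).
  { intros z m Hz. eapply Rle_trans; [apply coord_le_N, L_Mtrunc|].
    apply Rmult_le_compat_r; [left; apply Rinv_0_lt_compat; auto|].
    apply (N_Mtrunc_le_lp_norm C); auto. }
  apply ex_series_psum_bounded with (2 * (C * lp_norm p x / N (unit_seq i))); [intros; apply Rabs_pos|].
  intros m. replace (psum (fun j => Rabs (a i j * x j)) m) with (Mtrunc a m zp i - Mtrunc a m zn i).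
  - assert (Hp1 : Rabs (Mtrunc a m zp i) <= C * lp_norm p x / N (unit_seq i)).
    { apply Hcoord. intros j; unfold zp. destruct (Rle_dec 0 (a i j)); split; try apply Rabs_pos; lra. }
    assert (Hn1 : Rabs (Mtrunc a m zn i) <= C * lp_norm p x / N (unit_seq i)).
    { apply Hcoord. intros j; unfold zn. destruct (Rle_dec 0 (a i j)); split; try apply Rabs_pos; lra. }
    apply Rabs_le_between in Hp1. apply Rabs_le_between in Hn1. lra.
  - rewrite !Mtrunc_apply, <- psum_minus. apply psum_ext. intros j _.
    unfold zp, zn. rewrite Rabs_mult. destruct (Rle_dec 0 (a i j)).
    + rewrite (Rabs_right (a i j)) by lra. ring.
    + rewrite (Rabs_left (a i j)) by lra. ring.
Qed.

Lemma lp_bounded_of_sections_bounded : sections_bounded -> lp_bounded.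
Proof.
  intros HB. pose proof (rows_abs_summable HB) as Hrow. destruct HB as [C [HC HB]].
  assert (Hx : forall x, in_lp p x -> forall m, N (Mtrunc a m x) <= 2 * C * lp_norm p x).
  { intros x Hx m.
    replace (Mtrunc a m x) with (Mtrunc a m (fun j => Rmax 0 (x j) - Rmax 0 (- x j))).
    - eapply Rle_trans; [apply N_Mtrunc_sub|].
      assert (N (Mtrunc a m (fun j => Rmax 0 (x j))) <= C * lp_norm p x).
      { apply (N_Mtrunc_le_lp_norm C); auto. intros j. split; [apply Rmax_l|].
        apply Rmax_lub; [apply Rabs_pos | apply RRle_abs]. }
      assert (N (Mtrunc a m (fun j => Rmax 0 (- x j))) <= C * lp_norm p x).
      { apply (N_Mtrunc_le_lp_norm C); auto. intros j. split; [apply Rmax_l|].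
        apply Rmax_lub; [apply Rabs_pos | rewrite <- Rabs_Ropp; apply RRle_abs]. }
      lra.
    - apply Mtrunc_ext. intros j _. unfold Rmax.
      destruct (Rle_dec 0 (x j)), (Rle_dec 0 (- x j)); lra. }
  assert (Hlim : forall x, in_lp p x -> L (Mapp a x) /\ N (Mapp a x) <= 2 * C * lp_norm p x).
  { intros x Hxp. apply (L_N_le_of_pointwise_lim (fun m => Mtrunc a m x)); auto using L_Mtrunc.
    intros i. apply is_lim_seq_ext with (psum (fun j => a i j * x j)).
    - intros n. rewrite Mtrunc_apply. apply psum_ext; intros; ring.
    - apply is_series_psum, Series_correct, ex_series_Rabs, Hrow; auto. }
  split.
  - intros x Hxp. split; [|apply Hlim; auto]. intros i; apply ex_series_Rabs, Hrow; auto.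
  - exists (2 * C). intros x Hxp. apply Hlim; auto.
Qed.

Lemma lp_extendable_of_bounded : lp_bounded -> lp_extendable.
Proof.
  intros [Hmap [K HK]]. exists (Mapp a). split; [|split; [|split; [|split]]].
  - intros x y Hx Hy. apply Mapp_add; apply Hmap; auto.
  - intros c x _. apply Mapp_scal.
  - intros; apply Hmap; auto.
  - exists K; auto.
  - auto.
Qed.

(* On l^1 the extension is [M]; on the tail of x it is small in norm, hence in every
   coordinate, so the row series of [M x] converge to the coordinates of [T x]. *)
Lemma lp_bounded_of_extendable : lp_extendable -> lp_bounded.
Proof.
  intros [T [Hadd [Hsc [HL [[K HK] Hl]]]]].
  assert (HK' : forall x, in_lp p x -> N (T x) <= Rmax K 0 * lp_norm p x).
  { intros. eapply Rle_trans; [apply HK; auto|].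
    apply Rmult_le_compat_r; [apply lp_norm_nonneg | apply Rmax_l]. }
  assert (HM : forall x, in_lp p x -> forall i, is_series (fun j => a i j * x j) (T x i)).
  { intros x Hx i. apply is_series_psum. pose proof (N_unit_seq_pos i).
    apply (is_lim_seq_tail_bound p x _ _ (Rmax K 0 / N (unit_seq i))); auto.
    { apply Rdiv_le_0_compat; [apply Rmax_r | auto]. }
    intros n. assert (Htl : in_lp p (tail_seq n x)) by (apply in_lp_tail; auto; lra).
    assert (E : T x = seq_add (Mtrunc a n x) (T (tail_seq n x))).
    { rewrite <- Mapp_trunc, <- Hl, <- Hadd by auto using in_l1_trunc, in_lp_trunc.
      rewrite seq_add_trunc_tail; auto. }
    rewrite E. unfold seq_add. rewrite Mtrunc_apply.
    replace (psum (fun j => a i j * x j) n - (psum (fun j => x j * a i j) n + T (tail_seq n x) i))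
      with (- T (tail_seq n x) i)
      by (rewrite (psum_ext (fun j => a i j * x j) (fun j => x j * a i j)) by (intros; ring); ring).
    rewrite Rabs_Ropp. eapply Rle_trans; [apply coord_le_N; auto|].
    unfold Rdiv. rewrite Rmult_assoc, (Rmult_comm (/ _)), <- Rmult_assoc.
    apply Rmult_le_compat_r; [left; apply Rinv_0_lt_compat; auto | auto]. }
  assert (HT : forall x, in_lp p x -> Mapp a x = T x).
  { intros x Hx. apply functional_extensionality; intro i. apply is_series_unique, HM; auto. }
  split.
  - intros x Hx. split; [intros i; eexists; apply HM; auto|]. rewrite HT; auto.
  - exists (Rmax K 0). intros x Hx. rewrite HT; auto.
Qed.

Lemma dual_zero phi : in_dual L N phi -> phi seq_zero = 0.
Proof.
  intros [_ [Hs _]]. replace seq_zero with (seq_scal 0 seq_zero).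
  - rewrite Hs by apply L_zero. ring.
  - apply functional_extensionality; intro; unfold seq_scal, seq_zero; ring.
Qed.

Lemma dual_fin_comb phi F x : in_dual L N phi ->
  phi (fin_comb a F x) = fin_sum F (fun j => x j * phi (col a j)).
Proof.
  intros Hphi. induction F; [apply dual_zero; auto|].
  pose proof Hphi as [Ha [Hs _]].
  rewrite fin_comb_cons, Ha, Hs, IHF; auto using L_scal, L_fin_comb.
Qed.

Lemma dual_Mtrunc phi m x : in_dual L N phi ->
  phi (Mtrunc a m x) = psum (fun j => x j * phi (col a j)) m.
Proof. intros. unfold Mtrunc. rewrite dual_fin_comb; auto. apply fin_sum_seq0. Qed.

Lemma dual_Mapp_series phi x : lp_bounded -> in_dual L N phi -> in_lp p x ->
  is_series (fun j => x j * phi (col a j)) (phi (Mapp a x)).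
Proof.
  intros [Hmap [K HK]] Hphi Hx. pose proof Hphi as [Ha [Hs [K' HK']]].
  apply is_series_psum.
  apply (is_lim_seq_tail_bound p x _ _ (Rmax K' 0 * Rmax K 0)); auto.
  { apply Rmult_le_pos; apply Rmax_r. }
  intros n. assert (Htl : in_lp p (tail_seq n x)) by (apply in_lp_tail; auto; lra).
  assert (E : Mapp a x = seq_add (Mtrunc a n x) (Mapp a (tail_seq n x))).
  { rewrite <- (seq_add_trunc_tail n x) at 1. rewrite Mapp_add, Mapp_trunc; auto.
    - apply Hmap, in_lp_trunc.
    - apply Hmap; auto. }
  assert (HLt : L (Mapp a (tail_seq n x))) by (apply Hmap; auto).
  rewrite E, Ha, dual_Mtrunc by auto using L_Mtrunc.
  replace (psum (fun j => x j * phi (col a j)) n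
           - (psum (fun j => x j * phi (col a j)) n + phi (Mapp a (tail_seq n x))))
    with (- phi (Mapp a (tail_seq n x))) by ring.
  rewrite Rabs_Ropp. eapply Rle_trans; [apply HK'; auto|].
  apply Rle_trans with (Rmax K' 0 * N (Mapp a (tail_seq n x))).
  - apply Rmult_le_compat_r; [apply N_nonneg; auto | apply Rmax_l].
  - rewrite Rmult_assoc. apply Rmult_le_compat_l; [apply Rmax_r|].
    eapply Rle_trans; [apply HK; auto|].
    apply Rmult_le_compat_r; [apply lp_norm_nonneg | apply Rmax_l].
Qed.

Lemma lp_sub_l1m_of_bounded : lp_bounded -> lp_sub_l1m.
Proof.
  intros HA x Hx. pose proof HA as [Hmap _]. split.
  - intros phi Hphi.
    set (z := fun j => if Rle_dec 0 (phi (col a j)) then Rabs (x j) else - Rabs (x j)).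
    assert (Hz : in_lp p z).
    { apply in_lp_dom with x; auto; [lra|]. intros j; unfold z.
      destruct (Rle_dec 0 (phi (col a j))); [|rewrite Rabs_Ropp]; rewrite Rabs_Rabsolu; lra. }
    apply (ex_series_ext (fun j => z j * phi (col a j))).
    + intros j; unfold z; simpl. destruct (Rle_dec 0 (phi (col a j))).
      * rewrite (Rabs_right (phi _)) by lra. ring.
      * rewrite (Rabs_left (phi _)) by lra. ring.
    + eexists. apply dual_Mapp_series; auto.
  - intros A. set (z := fun j => if A j then x j else 0).
    assert (Hz : in_lp p z).
    { apply in_lp_dom with x; auto; [lra|]. intros j; unfold z.
      destruct (A j); [lra | rewrite Rabs_R0; apply Rabs_pos]. }
    exists (Mapp a z). split; [apply Hmap; auto|]. intros phi Hphi.
    unfold int_scalar. symmetry. apply is_series_unique.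
    apply (is_series_ext (fun j => z j * phi (col a j))).
    + intros j; unfold z. destruct (A j); simpl; ring.
    + apply dual_Mapp_series; auto.
Qed.

Lemma l1_sub_lrm_of_bounded : lp_bounded -> l1_sub_lrm.
Proof.
  intros HA x Hx. split.
  - apply lp_sub_l1m_of_bounded; auto. unfold in_lp.
    apply (ex_series_ext (fun j => Rabs (x j))); auto. intros j.
    rewrite (Rabs_right (rp _ _)) by (apply Rle_ge, rp_nonneg).
    rewrite rp_inv'; auto; [lra | apply Rabs_pos].
  - apply lp_sub_l1m_of_bounded; auto. apply in_lp_of_l1; auto.
Qed.

Lemma fin_comb_estimate_of_bounded : lp_bounded -> fin_comb_estimate.
Proof.
  intros [Hmap [K HK]]. exists (Rmax K 1). split; [apply Rlt_le_trans with 1; [lra | apply Rmax_r]|].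
  intros F x HD Hx0. destruct (list_upper_bound F) as [m Hm].
  set (z := fun j => if in_dec Nat.eq_dec j F then x j else 0).
  assert (Hz0 : forall j, 0 <= z j).
  { intros j; unfold z. destruct (in_dec Nat.eq_dec j F); auto; lra. }
  assert (Hzm : forall j, (m <= j)%nat -> z j = 0).
  { intros j Hj; unfold z. destruct (in_dec Nat.eq_dec j F); auto. specialize (Hm j i). lia. }
  assert (E1 : fin_comb a F x = Mapp a z).
  { rewrite (Mapp_finite_support a m z Hzm).
    apply functional_extensionality; intro i. rewrite Mtrunc_apply.
    change (fin_sum F (fun j => x j * a i j) = psum (fun j => z j * a i j) m).
    rewrite (fin_sum_NoDup F _ m); auto.
    apply psum_ext. intros j _. unfold z. destruct (in_dec Nat.eq_dec j F); ring. }
  assert (E2 : rp (fin_sum F (fun j => rp (x j) p)) (/ p) = lp_norm p z).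
  { unfold lp_norm. f_equal. rewrite (fin_sum_NoDup F _ m), (Series_finite_support _ m); auto.
    - apply psum_ext. intros j _. unfold z. rewrite Rabs_right by (apply Rle_ge, Hz0).
      destruct (in_dec Nat.eq_dec j F); auto. symmetry; apply rp_zero.
    - intros j Hj. rewrite Hzm, Rabs_R0, rp_zero; auto. }
  assert (Hzl : in_lp p z).
  { eexists. apply is_series_finite_support with (n := m). intros j Hj.
    rewrite Hzm, Rabs_R0, rp_zero; auto. }
  rewrite E1, E2. eapply Rle_trans; [apply HK; auto|].
  apply Rmult_le_compat_r; [apply lp_norm_nonneg | apply Rmax_l].
Qed.

Lemma sections_bounded_of_estimate : fin_comb_estimate -> sections_bounded.
Proof.
  intros [C [HC H]]. exists C. split; auto. intros m z Hz. unfold Mtrunc, lp_norm_upto.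
  rewrite <- fin_sum_seq0. apply H; auto using seq_NoDup.
Qed.

Lemma in_dual_coord i : in_dual L N (fun y => y i).
Proof.
  split; [|split]; [reflexivity | reflexivity|].
  exists (/ N (unit_seq i)). intros y Hy. rewrite Rmult_comm. apply coord_le_N; auto.
Qed.

(* Testing [in_l1m] against the coordinate functionals and the set [A = N]. *)
Lemma maps_of_l1m x : (forall j, 0 <= x j) -> in_l1m L N a x ->
  (forall i, ex_series (fun j => Rabs (a i j) * x j)) /\ L (Mapp a x).
Proof.
  intros Hx0 [Hvar Hint]. split.
  - intros i. apply (ex_series_ext (fun j => Rabs (x j) * Rabs (a i j)));
      [|apply (Hvar _ (in_dual_coord i))].
    intros j; simpl. rewrite Rabs_right by (apply Rle_ge; auto). ring.
  - destruct (Hint (fun _ => true)) as [v [Hv Hphi]].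
    replace (Mapp a x) with v; auto. apply functional_extensionality; intro i.
    rewrite (Hphi _ (in_dual_coord i)). unfold int_scalar, Mapp.
    apply Series_ext. intros j. unfold col. ring.
Qed.

Lemma maps_nonneg_of_lp_sub_l1m : lp_sub_l1m -> maps_nonneg_lp.
Proof. intros HC x Hx0 Hx. apply maps_of_l1m; auto. Qed.

(* For x >= 0 in l^p, the sequence (x_j^p) lies in l^1 and its (1/p)-th power is x again. *)
Lemma maps_nonneg_of_l1_sub_lrm : l1_sub_lrm -> maps_nonneg_lp.
Proof.
  intros HD x Hx0 Hx. set (y := fun j => rp (x j) p).
  assert (Hy : in_l1 y).
  { apply (ex_series_ext (fun j => rp (Rabs (x j)) p)); auto. intros j; unfold y.
    rewrite (Rabs_right (rp _ _)) by (apply Rle_ge, rp_nonneg).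
    rewrite Rabs_right by (apply Rle_ge; auto). auto. }
  destruct (HD y Hy) as [Hr _]. unfold in_lrm in Hr.
  replace (fun j => rp (Rabs (y j)) (/ p)) with x in Hr; [apply maps_of_l1m; auto|].
  apply functional_extensionality; intro j. unfold y.
  rewrite Rabs_right by (apply Rle_ge, rp_nonneg). rewrite rp_inv; auto; lra.
Qed.

Definition row_abs_sum (i m : nat) (z : seqR) : R := psum (fun j => Rabs (a i j) * z j) m.

Definition row_weight (D : nat -> R) (r : nat) : R := psum (fun i => N (unit_seq i) * D i) r.

Section GlidingHumpArgument.
Hypothesis HH : maps_nonneg_lp.

Lemma row_heavy_blocks i :
  ~ (exists D, 0 <= D /\ forall w M, (forall j, 0 <= w j) ->
       row_abs_sum i M w <= D * lp_norm_upto p M w) ->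
  forall n R, exists m w, unit_block p n m w /\ R < row_abs_sum i m w.
Proof.
  intros Hunb n R. apply (exists_heavy_block p Hp (row_abs_sum i)); unfold row_abs_sum.
  - intros m z w Hzw. apply psum_ext. intros j Hj; rewrite Hzw; auto.
  - intros m z s Hs. unfold Rdiv. rewrite Rmult_comm, <- psum_scal. apply psum_ext; intros; ring.
  - intros m n' z. rewrite <- psum_plus. right. apply psum_ext; intros j _.
    rewrite (trunc_add_tail n' z j) at 1. ring.
  - intros n'. exists (psum (fun j => Rabs (a i j)) n'). intros m z Hz.
    apply psum_trunc_le; auto using Rabs_pos; lra.
  - intros m z Hz. rewrite psum_zero; [lra|]. intros j Hj; rewrite Hz; auto; ring.
  - intros C HC. apply NNPP; intro Hc. apply Hunb. exists C. split; [lra|]. intros w M Hw.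
    apply Rnot_lt_le. intro Hlt. apply Hc. exists M, w. auto.
Qed.

(* A row functional finite on nonnegative l^p vectors is bounded: otherwise heavy blocks
   with coefficients 2^-k glue to an x >= 0 in l^p whose row sum exceeds every k. *)
Lemma row_functional_bounded i : exists D, 0 <= D /\ forall w M, (forall j, 0 <= w j) ->
  row_abs_sum i M w <= D * lp_norm_upto p M w.
Proof.
  apply NNPP; intro Hunb. pose proof (row_heavy_blocks i Hunb) as Hheavy.
  destruct (hump_build p (fun k n X r c m w r' =>
              c = (/ 2) ^ k /\ (INR k + 1) / c < row_abs_sum i m w))
    as [cc [nn [rr [ww Hall]]]].
  { intros k n X r. assert (0 < (/ 2) ^ k) by (apply pow_lt; lra).
    destruct (Hheavy n ((INR k + 1) / (/ 2) ^ k)) as [m [w [Hw HR]]].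
    exists ((/ 2) ^ k), m, w, r. split; [split; [|split]; auto; lra|]. split; [lia | auto]. }
  assert (Hblk : forall k, hump_block p k (nn k) (cc k) (nn (S k)) (ww k)) by apply Hall.
  set (x := hump_limit cc ww).
  assert (Hx0 : forall j, 0 <= x j) by (intros; eapply hump_limit_nonneg; eauto).
  destruct (HH x Hx0 (in_lp_hump_limit p Hp cc nn ww Hblk)) as [Hrow _].
  destruct (INR_unbounded (Series (fun j => Rabs (a i j) * x j))) as [k Hk].
  destruct (Hall k) as [_ [_ [Hck HQ]]]. pose proof (cc_pos p cc nn ww Hblk k).
  assert (cc k * row_abs_sum i (nn (S k)) (ww k) <= Series (fun j => Rabs (a i j) * x j)).
  { eapply Rle_trans; [|apply psum_le_Series; auto; intros; apply Rmult_le_pos; auto using Rabs_pos].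
    unfold row_abs_sum. rewrite <- psum_scal. apply psum_le. intros j _.
    pose proof (hump_block_le_limit p cc nn ww Hblk k j) as Hb. fold x in Hb.
    pose proof (Rabs_pos (a i j)). nra. }
  assert (INR k + 1 < cc k * row_abs_sum i (nn (S k)) (ww k)).
  { apply Rmult_lt_reg_r with (/ cc k); [apply Rinv_0_lt_compat; auto|].
    rewrite (Rmult_comm (cc k)), Rmult_assoc, Rinv_r, Rmult_1_r by lra. exact HQ. }
  lra.
Qed.

Lemma section_heavy_blocks : ~ sections_bounded ->
  forall n R, exists m w, unit_block p n m w /\ R < N (Mtrunc a m w).
Proof.
  intros Hunb n R. apply (exists_heavy_block p Hp (fun m z => N (Mtrunc a m z))).
  - intros m z w Hzw. rewrite (Mtrunc_ext a m z w); auto.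
  - intros m z s Hs.
    rewrite (Mtrunc_ext a m _ (fun j => / s * z j)), Mtrunc_scal, N_scal
      by (auto using L_Mtrunc; intros; unfold Rdiv; ring).
    rewrite Rabs_right by (apply Rle_ge; left; apply Rinv_0_lt_compat; auto). unfold Rdiv; ring.
  - intros m n' z.
    rewrite (Mtrunc_ext a m z (fun j => trunc n' z j + tail_seq n' z j))
      by (intros; apply trunc_add_tail).
    rewrite Mtrunc_add. apply N_triang; apply L_Mtrunc.
  - intros n'. exists (psum (fun j => N (col a j)) n'). intros m z Hz.
    eapply Rle_trans; [apply N_Mtrunc_le|].
    rewrite (psum_ext _ (fun j => N (col a j) * trunc n' z j)).
    + apply psum_trunc_le; auto using N_nonneg; lra.
    + intros j _. rewrite Rabs_right; [ring|].
      unfold trunc. destruct (lt_dec j n'); [apply Rle_ge, Hz | lra].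
  - intros m z Hz. eapply Rle_trans; [apply N_Mtrunc_le|].
    rewrite psum_zero; [lra|]. intros j Hj. rewrite Hz, Rabs_R0 by auto. ring.
  - intros C HC. apply NNPP; intro Hc. apply Hunb. exists C. split; [lra|]. intros m z Hz.
    apply Rnot_lt_le. intro Hlt. apply Hc. exists m, z. auto.
Qed.

(* The cutoff [r'] is where the Fatou property realises the norm of the new block up to
   [1/c]; the coefficient is chosen after the cutoff of the previous block. *)
Lemma hump_step D k n X r : (forall i, 0 <= D i) -> ~ sections_bounded ->
  exists c m w r', hump_block p k n c m w /\ (r <= r')%nat /\
    c = (/ 2) ^ k / (1 + row_weight D r) /\
    N (Mtrunc a n X) + 1 + INR k < c * N (trunc r' (Mtrunc a m w)).
Proof.
  intros HD Hunb. set (c := (/ 2) ^ k / (1 + row_weight D r)).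
  assert (HE : 0 <= row_weight D r).
  { apply psum_nonneg. intros i. apply Rmult_le_pos; [left; apply N_unit_seq_pos | auto]. }
  pose proof (pow_lt (/ 2) k ltac:(lra)).
  assert (Hc : 0 < c) by (apply Rdiv_lt_0_compat; lra).
  assert (Hc2 : c <= (/ 2) ^ k).
  { unfold c, Rdiv. rewrite <- (Rmult_1_r ((/ 2) ^ k)) at 2. apply Rmult_le_compat_l; [lra|].
    rewrite <- Rinv_1. apply Rinv_le_contravar; lra. }
  set (P := N (Mtrunc a n X)).
  destruct (section_heavy_blocks Hunb n ((P + 2 + INR k) / c)) as [m [w [Hw HR]]].
  destruct (N_trunc_approx (Mtrunc a m w) (/ c)) as [r'' Hr''];
    [apply L_Mtrunc | apply Rinv_0_lt_compat; auto|].
  exists c, m, w, (max r r''). split; [split; [|split]; auto|]. split; [lia|]. split; [reflexivity|].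
  pose proof (N_trunc_mono r'' (max r r'') (Mtrunc a m w) ltac:(lia)).
  assert (Hlt : c * ((P + 2 + INR k) / c - / c) < c * N (trunc (max r r'') (Mtrunc a m w)))
    by (apply Rmult_lt_compat_l; lra).
  replace (c * ((P + 2 + INR k) / c - / c)) with (P + 1 + INR k) in Hlt by (field; lra). exact Hlt.
Qed.

Section HumpEstimates.
Variable D : nat -> R.
Hypothesis HD : forall i, 0 <= D i /\ forall w M, (forall j, 0 <= w j) ->
  row_abs_sum i M w <= D i * lp_norm_upto p M w.
Variables (cc : nat -> R) (nn rr : nat -> nat) (ww : nat -> seqR).
Hypothesis Hblk : forall k, hump_block p k (nn k) (cc k) (nn (S k)) (ww k).
Hypothesis Hrr : forall k, (rr k <= rr (S k))%nat.
Hypothesis Hcc : forall k, cc k = (/ 2) ^ k / (1 + row_weight D (rr k)).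
Hypothesis Hheavy : forall k, N (Mtrunc a (nn k) (hump_sum cc ww k)) + 1 + INR k
                              < cc k * N (trunc (rr (S k)) (Mtrunc a (nn (S k)) (ww k))).

Lemma row_weight_nonneg r : 0 <= row_weight D r.
Proof. apply psum_nonneg. intros i. apply Rmult_le_pos; [left; apply N_unit_seq_pos | apply HD]. Qed.

Lemma rr_mono k l : (k <= l)%nat -> (rr k <= rr l)%nat.
Proof. intros H. induction H; [lia|]. specialize (Hrr m). lia. Qed.

Lemma row_abs_sum_block_le i l M : row_abs_sum i M (ww l) <= D i.
Proof.
  destruct (HD i) as [HD0 HDi].
  eapply Rle_trans; [apply HDi; intros; apply (ww_nonneg p cc nn ww Hblk)|].
  rewrite <- (Rmult_1_r (D i)) at 2. apply Rmult_le_compat_l; auto.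
  rewrite <- (rp_one (/ p)). apply rp_mono; [apply Rinv_0_lt_compat; lra|].
  split; [apply psum_nonneg; intros; apply rp_nonneg | apply (ww_norm p cc nn ww Hblk)].
Qed.

Lemma cc_le_after k l : (k < l)%nat -> cc l <= / (1 + row_weight D (rr (S k))) * (/ 2) ^ l.
Proof.
  intros Hl. rewrite Hcc. unfold Rdiv. rewrite Rmult_comm.
  apply Rmult_le_compat_r; [left; apply pow_lt; lra|].
  pose proof (row_weight_nonneg (rr (S k))).
  apply Rinv_le_contravar; [lra|]. apply Rplus_le_compat_l.
  apply psum_mono; [intros i; apply Rmult_le_pos; [left; apply N_unit_seq_pos | apply HD]|].
  apply rr_mono. lia.
Qed.

Lemma hump_row_error i k :
  Rabs (Mtrunc a (nn (S k)) (hump_sum cc ww (S k)) i - Mapp a (hump_limit cc ww) i)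
  <= D i * / (1 + row_weight D (rr (S k))) * (/ 2) ^ k.
Proof.
  set (x := hump_limit cc ww). set (X := hump_sum cc ww (S k)).
  assert (Hx0 : forall j, 0 <= x j) by (intros; eapply hump_limit_nonneg; eauto).
  assert (HX0 : forall j, 0 <= X j) by (intros; eapply hump_sum_nonneg; eauto).
  assert (Hge : forall j, 0 <= x j - X j).
  { intros j. pose proof (hump_sum_le_limit p cc nn ww Hblk (S k) j). unfold x, X. lra. }
  destruct (HH x Hx0 (in_lp_hump_limit p Hp cc nn ww Hblk)) as [Hrow _].
  assert (Hx : ex_series (fun j => a i j * x j)).
  { apply ex_series_Rabs, (ex_series_ext (fun j => Rabs (a i j) * x j)); auto.
    intros j; simpl. rewrite Rabs_mult, (Rabs_right (x j)); auto. apply Rle_ge; auto. }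
  assert (HXs : is_series (fun j => a i j * X j) (Mtrunc a (nn (S k)) X i)).
  { rewrite Mtrunc_apply, (psum_ext _ (fun j => a i j * X j)) by (intros; ring).
    apply is_series_finite_support. intros j Hj. unfold X.
    rewrite (hump_sum_support p cc nn ww Hblk); auto. ring. }
  assert (Hd : ex_series (fun j => Rabs (a i j * (x j - X j)))).
  { apply ex_series_le_nonneg with (fun j => Rabs (a i j) * x j); auto. intros j.
    split; [apply Rabs_pos|]. rewrite Rabs_mult, (Rabs_right (x j - X j)) by (apply Rle_ge; auto).
    apply Rmult_le_compat_l; [apply Rabs_pos|]. pose proof (HX0 j). lra. }
  assert (E : Mtrunc a (nn (S k)) X i - Mapp a x i = - Series (fun j => a i j * (x j - X j))).
  { rewrite (Series_ext _ (fun j => a i j * x j - a i j * X j)) by (intros; ring).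
    rewrite Series_minus, (is_series_unique _ _ HXs); [unfold Mapp; ring | auto | eexists; eauto]. }
  rewrite E, Rabs_Ropp. eapply Rle_trans; [apply Series_Rabs; auto|].
  apply Series_le_psum_bound; auto. intros M.
  rewrite (psum_ext _ (fun j => Rabs (a i j) * (x j - X j))).
  - apply (hump_tail_bound p cc nn ww Hblk); auto using Rabs_pos.
    + apply HD.
    + left; apply Rinv_0_lt_compat. pose proof (row_weight_nonneg (rr (S k))). lra.
    + intros l M'. apply row_abs_sum_block_le.
    + intros l Hl. apply cc_le_after; auto.
  - intros j _. rewrite Rabs_mult, (Rabs_right (x j - X j)); auto. apply Rle_ge; auto.
Qed.

(* Only the first [rr (S k)] rows are compared, each with weight [N (unit_seq i)]; the
   coefficient [cc] was chosen so that the sum of these weights is absorbed. *)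
Lemma hump_head_error k :
  N (trunc (rr (S k)) (fun i => Mtrunc a (nn (S k)) (hump_sum cc ww (S k)) i
                                - Mapp a (hump_limit cc ww) i)) <= 1.
Proof.
  set (r := rr (S k)). set (t := / (1 + row_weight D r)).
  pose proof (row_weight_nonneg r) as HE.
  assert (Ht : 0 < t) by (apply Rinv_0_lt_compat; lra).
  assert (HtE : t * row_weight D r <= 1).
  { unfold t. apply Rmult_le_reg_l with (1 + row_weight D r); [lra|].
    rewrite <- Rmult_assoc, Rinv_r, Rmult_1_l by lra. lra. }
  eapply Rle_trans; [apply N_trunc_le_psum|].
  apply Rle_trans with ((/ 2) ^ k * (t * row_weight D r)).
  - unfold row_weight. rewrite <- !psum_scal. apply psum_le. intros i _.
    pose proof (hump_row_error i k) as Hi. fold r t in Hi. pose proof (N_unit_seq_pos i).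
    replace ((/ 2) ^ k * (t * (N (unit_seq i) * D i)))
      with (D i * t * (/ 2) ^ k * N (unit_seq i)) by ring.
    apply Rmult_le_compat_r; lra.
  - assert ((/ 2) ^ k <= 1) by (rewrite <- (pow1 k); apply pow_incr; lra).
    pose proof (pow_lt (/ 2) k ltac:(lra)).
    assert (0 <= t * row_weight D r) by (apply Rmult_le_pos; lra). nra.
Qed.

(* Block [k] is large on the first [rr (S k)] rows, the earlier blocks are fixed and the
   later ones are negligible there. *)
Lemma N_Mapp_hump_limit_gt k : INR k < N (Mapp a (hump_limit cc ww)).
Proof.
  set (x := hump_limit cc ww). set (r := rr (S k)). set (m := nn (S k)).
  set (X := hump_sum cc ww k). set (Y := Mtrunc a m (hump_sum cc ww (S k))).
  assert (Hx0 : forall j, 0 <= x j) by (intros; eapply hump_limit_nonneg; eauto).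
  destruct (HH x Hx0 (in_lp_hump_limit p Hp cc nn ww Hblk)) as [_ HyL].
  assert (NY : N (trunc r Y) <= N (Mapp a x) + 1).
  { replace (trunc r Y) with (seq_add (trunc r (Mapp a x)) (trunc r (fun i => Y i - Mapp a x i))).
    - eapply Rle_trans; [apply N_triang; apply L_trunc|].
      pose proof (N_trunc_le r _ HyL). pose proof (hump_head_error k) as Herr.
      fold x r m in Herr. fold Y in Herr. lra.
    - apply functional_extensionality; intro i. unfold seq_add, trunc. destruct (lt_dec i r); ring. }
  assert (EY : seq_scal (cc k) (trunc r (Mtrunc a m (ww k)))
               = seq_add (trunc r Y) (seq_scal (-1) (trunc r (Mtrunc a m X)))).
  { unfold Y. change (hump_sum cc ww (S k)) with (fun j => X j + cc k * ww k j).
    rewrite Mtrunc_add, Mtrunc_scal. apply functional_extensionality; intro i.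
    unfold seq_add, seq_scal, trunc. destruct (lt_dec i r); ring. }
  assert (N1 : cc k * N (trunc r (Mtrunc a m (ww k))) <= N (trunc r Y) + N (trunc r (Mtrunc a m X))).
  { rewrite <- (Rabs_right (cc k)) by (apply Rle_ge; left; apply (cc_pos p cc nn ww Hblk)).
    rewrite <- N_scal, EY by apply L_trunc. apply N_sub_triang; apply L_trunc. }
  assert (N2 : N (trunc r (Mtrunc a m X)) <= N (Mtrunc a (nn k) X)).
  { rewrite (Mtrunc_tail a (nn k) m X); [apply N_trunc_le, L_Mtrunc | |].
    - intros; eapply hump_sum_support; eauto.
    - apply Nat.lt_le_incl, (nn_lt p cc nn ww Hblk). }
  pose proof (Hheavy k) as Hk. fold X m r in Hk. lra.
Qed.

End HumpEstimates.

Lemma sections_bounded_of_maps_nonneg : sections_bounded.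
Proof.
  apply NNPP; intro Hunb.
  destruct (choice _ row_functional_bounded) as [D HD].
  destruct (hump_build p (fun k n X r c m w r' =>
              c = (/ 2) ^ k / (1 + row_weight D r) /\
              N (Mtrunc a n X) + 1 + INR k < c * N (trunc r' (Mtrunc a m w))))
    as [cc [nn [rr [ww Hall]]]].
  { intros k n X r. destruct (hump_step D k n X r) as [c [m [w [r' H]]]]; auto.
    - intros i; apply HD.
    - exists c, m, w, r'. tauto. }
  destruct (INR_unbounded (N (Mapp a (hump_limit cc ww)))) as [k Hk].
  pose proof (N_Mapp_hump_limit_gt D HD cc nn rr ww) as Hgt.
  specialize (Hgt (fun k => proj1 (Hall k)) (fun k => proj1 (proj2 (Hall k)))
                  (fun k => proj1 (proj2 (proj2 (Hall k)))) (fun k => proj2 (proj2 (proj2 (Hall k)))) k).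
  lra.
Qed.

End GlidingHumpArgument.
End Matrix.
End BanachFunctionSpace.

Theorem proposition7p9
  (L : seqR -> Prop) (N : seqR -> R) (a : nat -> nat -> R) (p : R)
  (HBFS : is_BFS L N) (HFatou : Fatou L N)
  (Hl1 : forall x, in_l1 x -> L x)
  (Hnz : forall j, exists i, a i j <> 0)
  (Hcol : forall j, L (col a j))
  (Hsup : exists B, forall j, N (col a j) <= B)
  (Hp : 1 < p) :
  let Pa :=
    (forall x, in_lp p x ->
       (forall i, ex_series (fun j => a i j * x j)) /\ L (Mapp a x)) /\
    (exists K, forall x, in_lp p x -> N (Mapp a x) <= K * lp_norm p x) in
  let Pb :=
    exists T : seqR -> seqR,
      (forall x y, in_lp p x -> in_lp p y -> T (seq_add x y) = seq_add (T x) (T y)) /\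
      (forall c x, in_lp p x -> T (seq_scal c x) = seq_scal c (T x)) /\
      (forall x, in_lp p x -> L (T x)) /\
      (exists K, forall x, in_lp p x -> N (T x) <= K * lp_norm p x) /\
      (forall x, in_l1 x -> T x = Mapp a x) in
  let Pc := forall x, in_lp p x -> in_l1m L N a x in
  let Pd := forall x, in_l1 x -> in_lrm L N a (/ p) x /\ in_l1m L N a x in
  let Pe :=
    exists C, 0 < C /\
      forall (F : list nat) (x : seqR), NoDup F -> (forall j, In j F -> 0 <= x j) ->
        N (fin_comb a F x) <= C * rp (fin_sum F (fun j => rp (x j) p)) (/ p) in
  (Pa <-> Pb) /\ (Pa <-> Pc) /\ (Pa <-> Pd) /\ (Pa <-> Pe).
Proof.
  cbv zeta.
  pose proof (lp_bounded_of_sections_bounded L N HBFS Hl1 HFatou a p Hcol Hp) as of_sections.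
  assert (of_maps : maps_nonneg_lp L a p -> lp_bounded L N a p).
  { intros HH. apply of_sections, (sections_bounded_of_maps_nonneg L N HBFS Hl1 HFatou a p Hcol Hp HH). }
  split; [|split; [|split]]; split.
  - apply lp_extendable_of_bounded.
  - apply (lp_bounded_of_extendable L N HBFS Hl1 a p Hp).
  - apply (lp_sub_l1m_of_bounded L N HBFS a p Hcol Hp).
  - intros HC. apply of_maps, (maps_nonneg_of_lp_sub_l1m L N HBFS Hl1 a p HC).
  - apply (l1_sub_lrm_of_bounded L N HBFS a p Hcol Hp).
  - intros HD. apply of_maps, (maps_nonneg_of_l1_sub_lrm L N HBFS Hl1 a p Hp HD).
  - apply fin_comb_estimate_of_bounded.
  - intros HE. apply of_sections, sections_bounded_of_estimate, HE.
Qed.
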